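(* Let $\Phi(u,v)=P(u)(1-v)F(u,uv)$ for $(u,v)\in\mathbb{D}^2$. Then $\Phi$ satisfies, for $u\ne0$, the inhomogeneous linear PDE $$\frac{\partial\Phi}{\partial u}-\frac{u-q}{P(u)}\,v(1-v)\frac{\partial\Phi}{\partial v}+\mathcal{L}(u,v)=0,$$ where $$\mathcal{L}(u,v)=(1-v)\frac{L(u,uv)}{u}=(1-v)\left(\frac{v}{1-u}+(1+v)E(q,uv)-v(s+1+\rho-uv)\frac{\partial E}{\partial v}(q,uv)\right).$$
   Context: Queueing model: an $M^{[X]}/M/1$ processor-sharing queue with Poisson batch arrivals of rate $\rho>0$, exponential job services of mean $1$, unit capacity shared equally among all jobs present, all random quantities independent; batch sizes geometric $\mathbb{P}(B=b)=(1-q)q^{b-1}$, $b\ge1$, with $q\in(0,1)$, $\rho+q<1$. For $n\ge0,b\ge1$, $\Omega_{n,b}$ is the sojourn time of a tagged batch (arrival to departure of its last job) given $n$ jobs present at its arrival and batch size $b$; $e^*_{n,b}(s)=\mathbb{E}(e^{-s\Omega_{n,b}})$, $\Re(s)\ge0$ fixed and suppressed from notation. $\mathbb{D}$ is the open unit disk; $E(u,v)=\sum_{n\ge0}\sum_{b\ge1}e^*_{n,b}(s)u^nv^b$; $F(u,v)=\frac{E(u,v)-E(q,v)}{u-q}$ for $u\ne q$, $F(q,v)=\frac{\partial E}{\partial u}(q,v)$; $P(u)=u^2-(s+1+\rho+q)u+sq+\rho+q$; $L(u,v)=\frac{v}{1-u}+(u+v)E(q,v)-v(s+1+\rho-v)\frac{\partial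 E}{\partial v}(q,v)$. *)

From Stdlib Require Import Reals ClassicalEpsilon.
From Coquelicot Require Import Coquelicot.
Open Scope R_scope.

(* the value of a convergent complex series (0 if it does not converge) *)
Definition CSeries (a : nat -> C) : C :=
  epsilon (inhabits (RtoC 0))
    (fun l : C => is_series (K := C_AbsRing) (V := C_NormedModule) a l).

(* complex derivative of f : C -> C at z (0 if f is not C-differentiable at z) *)
Definition CDeriv (f : C -> C) (z : C) : C :=
  epsilon (inhabits (RtoC 0))
    (fun l : C => is_derive (K := C_AbsRing) (V := C_NormedModule) f z l).

Definition Cex_derive (f : C -> C) (z : C) : Prop :=
  exists l : C, is_derive (K := C_AbsRing) (V := C_NormedModule) f z l.

Fixpoint Cpow (z : C) (n : nat) : C :=
  match n with O => RtoC 1 | S m => Cmult z (Cpow z m) end.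

Definition inD (z : C) : Prop := Cmod z < 1.

(* ---------- the M^[X]/M/1-PS model: sojourn time of a tagged batch ----------
   State of the tagged batch: (n, b) = n other jobs present, b jobs of the
   tagged batch still present.  In any state with b >= 1 the total event rate
   is rho + 1 (Poisson arrivals, rate rho, of a geometric batch joining the
   "other" jobs; total service capacity 1 shared equally among the n+b jobs,
   exponential services of mean 1, so a tagged job leaves at rate b/(n+b) and
   another job at rate n/(n+b)).  Hence Omega_{n,b} is the sum of N iid
   Exp(rho+1) holding times, N the number of jumps of the embedded jump chain
   until b = 0, independent of the holding times.
   [absp rho q k n b] = P(N = k) started from (n,b). *)
Fixpoint absp (rho q : R) (k n b : nat) : R :=
  match k with
  | O => match b with O => 1 | S _ => 0 end
  | S k' =>
    match b with
    | O => 0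
    | S b' =>
        rho / (rho + 1) *
          Series (fun j : nat => (1 - q) * q ^ j * absp rho q k' (n + S j) b)
        + / (rho + 1) *
          (INR n / INR (n + b) * absp rho q k' (Nat.pred n) b
           + INR b / INR (n + b) * absp rho q k' n b')
    end
  end.

(* e*_{n,b}(s) = E(exp(-s Omega_{n,b})) = sum_k P(N=k) ((rho+1)/(s+rho+1))^k *)
Definition estar (rho q : R) (s : C) (n b : nat) : C :=
  CSeries (fun k : nat =>
    Cmult (RtoC (absp rho q k n b))
          (Cpow (Cdiv (RtoC (rho + 1)) (Cplus s (RtoC (rho + 1)))) k)).

Definition Egen (rho q : R) (s : C) (u v : C) : C :=
  CSeries (fun n : nat =>
    CSeries (fun b' : nat =>
      Cmult (estar rho q s n (S b')) (Cmult (Cpow u n) (Cpow v (S b'))))).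

Definition dEu (rho q : R) (s : C) (u v : C) : C :=
  CDeriv (fun x => Egen rho q s x v) u.
Definition dEv (rho q : R) (s : C) (u v : C) : C :=
  CDeriv (fun y => Egen rho q s u y) v.

Definition Ffun (rho q : R) (s : C) (u v : C) : C :=
  match Req_EM_T (Re u) q, Req_EM_T (Im u) 0 with
  | left _, left _ => dEu rho q s (RtoC q) v
  | _, _ => Cdiv (Cminus (Egen rho q s u v) (Egen rho q s (RtoC q) v))
                 (Cminus u (RtoC q))
  end.

Definition Ppol (rho q : R) (s : C) (u : C) : C :=
  Cplus (Cminus (Cmult u u) (Cmult (Cplus s (RtoC (1 + rho + q))) u))
        (Cplus (Cmult s (RtoC q)) (RtoC (rho + q))).

Definition Lfun (rho q : R) (s : C) (u v : C) : C :=
  Cminus (Cplus (Cdiv v (Cminus (RtoC 1) u))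
                (Cmult (Cplus u v) (Egen rho q s (RtoC q) v)))
         (Cmult (Cmult v (Cminus (Cplus s (RtoC (1 + rho))) v))
                (dEv rho q s (RtoC q) v)).

Definition Phi (rho q : R) (s : C) (u v : C) : C :=
  Cmult (Cmult (Ppol rho q s u) (Cminus (RtoC 1) v)) (Ffun rho q s u (Cmult u v)).

Definition calL (rho q : R) (s : C) (u v : C) : C :=
  Cdiv (Cmult (Cminus (RtoC 1) v) (Lfun rho q s u (Cmult u v))) u.

(* Conditioning on the first jump of the embedded chain gives, for all n and b,
     (s + rho + 1) e_{n,b+1} = rho (1 - q) B_{n,b+1} + n/(n+b+1) e_{n-1,b+1}
                               + (b+1)/(n+b+1) e_{n,b},
   where B_{n,b} = sum_j q^j e_{n+1+j,b}.  All e_{n,b} and B_{n,b} are bounded, so E and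
   F(u,v) = sum_{n,b} B_{n,b} u^n v^b are double power series on the open bidisk that may be
   differentiated termwise.  Comparing coefficients gives (u - q) F(u,v) = E(u,v) - E(q,v), and
   the recurrence multiplied by n + b + 1 becomes the first-order equation
     (s + rho + 1) (u E_u + v E_v)
       = rho (1 - q) (u F_u + v F_v) + u (u E_u + E) + v (v E_v + E) + v / (1 - u).
   Substituting E = (u - q) F + E(q, .) and evaluating at (u, uv) yields the equation for Phi. *)

From Stdlib Require Import Reals Lra Lia ClassicalEpsilon FunctionalExtensionality.
From Coquelicot Require Import Coquelicot.
Open Scope R_scope.

Notation is_CSeries := (@is_series C_AbsRing C_NormedModule).
Notation is_Cderive := (@is_derive C_AbsRing C_NormedModule).

Lemma CSeries_correct (a : nat -> C) (l : C) : is_CSeries a l -> is_CSeries a (CSeries a).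
Proof.
  intros Hl. exact (epsilon_spec (inhabits (RtoC 0)) (is_CSeries a) (ex_intro _ l Hl)).
Qed.

Lemma is_CSeries_unique (a : nat -> C) (l : C) : is_CSeries a l -> CSeries a = l.
Proof.
  intros Hl. exact (filterlim_locally_unique (F := eventually) _ _ _ (CSeries_correct a l Hl) Hl).
Qed.

Lemma CSeries_ext (a b : nat -> C) : (forall n, a n = b n) -> CSeries a = CSeries b.
Proof. intros H. f_equal. now apply functional_extensionality. Qed.

Lemma is_CSeries_ext (a b : nat -> C) (l : C) :
  (forall n, a n = b n) -> is_CSeries a l -> is_CSeries b l.
Proof. apply is_series_ext. Qed.

Lemma is_CSeries_plus (a b : nat -> C) (la lb : C) : is_CSeries a la -> is_CSeries b lb ->
  is_CSeries (fun n => a n + b n)%C (la + lb)%C.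
Proof. intros Ha Hb. exact (is_series_plus _ _ _ _ Ha Hb). Qed.

Lemma is_CSeries_minus (a b : nat -> C) (la lb : C) : is_CSeries a la -> is_CSeries b lb ->
  is_CSeries (fun n => a n - b n)%C (la - lb)%C.
Proof. intros Ha Hb. exact (is_series_minus _ _ _ _ Ha Hb). Qed.

Lemma is_CSeries_scal (c : C) (a : nat -> C) (l : C) :
  is_CSeries a l -> is_CSeries (fun n => c * a n)%C (c * l)%C.
Proof. intros Ha. exact (is_series_scal c _ _ Ha). Qed.

Lemma is_CSeries_cons (a : nat -> C) (l : C) :
  is_CSeries (fun n => a (S n)) l -> is_CSeries a (a 0%nat + l)%C.
Proof.
  intros H. apply is_series_decr_1.
  match goal with |- is_series _ ?x =>
    replace x with l by (change (l = a 0%nat + l - a 0%nat)%C; ring) end.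
  exact H.
Qed.

Lemma is_CSeries_decr_1 (a : nat -> C) (l : C) :
  is_CSeries (fun n => a (S n)) l -> a 0%nat = RtoC 0 -> is_CSeries a l.
Proof.
  intros H H0. replace l with (a 0%nat + l)%C by (rewrite H0; ring). now apply is_CSeries_cons.
Qed.

Lemma is_CSeries_incr_1 (a : nat -> C) (l : C) :
  is_CSeries a l -> a 0%nat = RtoC 0 -> is_CSeries (fun n => a (S n)) l.
Proof.
  intros H H0. apply is_series_incr_1.
  match goal with |- is_series _ ?x =>
    replace x with l by (change (l = l + a 0%nat)%C; rewrite H0; ring) end.
  exact H.
Qed.

Lemma is_CSeries_zero : is_CSeries (fun _ => RtoC 0) (RtoC 0).
Proof.
  apply filterlim_ext with (fun _ => RtoC 0); [|apply filterlim_const].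
  intros n; induction n as [|n IH]; [now rewrite sum_O|].
  rewrite sum_Sn, <- IH. change (RtoC 0 = 0 + 0)%C. ring.
Qed.

Lemma Cmod_sum_n_le (a : nat -> C) (b : nat -> R) N : (forall n, Cmod (a n) <= b n) ->
  Cmod (sum_n (G := C_AbelianMonoid) a N) <= sum_n b N.
Proof.
  intros Hb. induction N as [|N IH]; [rewrite !sum_O; auto|].
  rewrite !sum_Sn. eapply Rle_trans; [apply Cmod_triangle|].
  change (plus (sum_n b N) (b (S N))) with (sum_n b N + b (S N)).
  specialize (Hb (S N)). lra.
Qed.

Lemma is_CSeries_Cmod_le (a : nat -> C) (l : C) (b : nat -> R) (L : R) :
  is_CSeries a l -> is_series b L -> (forall n, Cmod (a n) <= b n) -> Cmod l <= L.
Proof.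
  intros Ha Hb Hab.
  assert (Hn : is_lim_seq (fun N => Cmod (sum_n (G := C_AbelianMonoid) a N)) (Cmod l))
    by exact (filterlim_comp _ _ _ _ _ _ _ _ Ha
                (filterlim_norm (K := C_AbsRing) (V := C_NormedModule) l)).
  exact (is_lim_seq_le _ _ _ _ (fun N => Cmod_sum_n_le a b N Hab) Hn (Hb : is_lim_seq (sum_n b) L)).
Qed.

Lemma CSeries_correct_le (a : nat -> C) (b : nat -> R) :
  (forall n, Cmod (a n) <= b n) -> ex_series b -> is_CSeries a (CSeries a).
Proof.
  intros Hab Hb.
  destruct (ex_series_le (K := C_AbsRing) (V := C_CompleteNormedModule) a b Hab Hb) as [l Hl].
  exact (CSeries_correct a l Hl).
Qed.

Lemma Clim_seq_of_bound (f : nat -> C) l e : is_lim_seq e 0 ->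
  (forall N, Cmod (f N - l)%C <= e N) -> filterlim f eventually (locally l).
Proof.
  intros He Hb. apply (filterlim_locally_ball_norm (K := C_AbsRing) (U := C_NormedModule)).
  intros eps. apply is_lim_seq_spec in He. destruct (He eps) as [N HN].
  exists N. intros n Hn. specialize (HN n Hn). specialize (Hb n).
  change (Cmod (f n - l)%C < eps). rewrite Rminus_0_r in HN.
  pose proof (Rle_abs (e n)). lra.
Qed.

Lemma one_minus_neq_0 x : Cmod x < 1 -> (1 - x)%C <> RtoC 0.
Proof.
  intros Hx E. replace x with (1 - (1 - x))%C in Hx by ring. rewrite E in Hx.
  replace (1 - 0)%C with (RtoC 1) in Hx by ring. rewrite Cmod_1 in Hx. lra.
Qed.

Lemma is_CSeries_geom u : Cmod u < 1 -> is_CSeries (Cpow u) (/ (1 - u))%C.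
Proof.
  intros Hu. pose proof (one_minus_neq_0 u Hu) as Hnz.
  assert (Hm : 0 < Cmod (1 - u)%C) by now apply Cmod_gt_0.
  apply Clim_seq_of_bound with (fun N => Cmod u ^ S N / Cmod (1 - u)%C).
  - apply (is_lim_seq_incr_1 (fun N => Cmod u ^ N / Cmod (1 - u)%C)).
    replace (Finite 0) with (Rbar_mult 0 (/ Cmod (1 - u)%C)) by (simpl; f_equal; ring).
    apply is_lim_seq_scal_r, is_lim_seq_geom.
    rewrite Rabs_pos_eq by apply Cmod_ge_0. exact Hu.
  - intros N.
    assert (Hsum : Cmult (1 - u) (sum_n (G := C_AbelianMonoid) (Cpow u) N) = (1 - u ^ S N)%C).
    { induction N as [|N IH]; [rewrite sum_O; simpl; ring|].
      rewrite sum_Sn. change (plus ?x ?y) with (x + y)%C.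
      rewrite Cmult_plus_distr_l, IH. simpl. ring. }
    match goal with |- Cmod ?x <= _ => replace x with (- u ^ S N / (1 - u))%C end.
    + rewrite Cmod_div, Cmod_opp, Cmod_pow by exact Hnz. lra.
    + rewrite <- (Cmult_1_l (sum_n _ _)), <- (Cinv_l (1 - u)%C Hnz), <- Cmult_assoc, Hsum.
      field. exact Hnz.
Qed.

Lemma is_CSeries_RtoC (f : nat -> R) l : is_series f l -> is_CSeries (fun n => RtoC (f n)) (RtoC l).
Proof.
  intros H. apply Clim_seq_of_bound with (fun N => Rabs (sum_n f N - l)).
  - replace 0 with (Rabs (l - l)) by (rewrite Rminus_eq_0; apply Rabs_R0).
    apply (is_lim_seq_abs _ (Finite (l - l))), is_lim_seq_minus'; [exact H|apply is_lim_seq_const].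
  - intros N.
    match goal with |- Cmod (?S - _)%C <= _ => replace S with (RtoC (sum_n f N)) end.
    + rewrite <- RtoC_minus, Cmod_R. lra.
    + induction N as [|N IH]; [now rewrite !sum_O|].
      rewrite !sum_Sn, <- IH. apply RtoC_plus.
Qed.

Lemma Series_tail (a : nat -> R) N : ex_series a ->
  Series a = sum_n a N + Series (fun k => a (S N + k)%nat).
Proof. intros Ha. rewrite (Series_incr_n a (S N)), sum_n_Reals by (auto || lia). reflexivity. Qed.

Lemma Series_nonneg (a : nat -> R) : ex_series a -> (forall n, 0 <= a n) -> 0 <= Series a.
Proof.
  intros Ha Hp.
  assert (H0 : forall N, 0 <= sum_n a N) by (intros N; rewrite sum_n_Reals; now apply cond_pos_sum).
  assert (Hl : is_lim_seq (sum_n a) (Series a)) by exact (Series_correct _ Ha).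
  exact (is_lim_seq_le _ _ _ _ H0 (is_lim_seq_const 0) Hl).
Qed.

Lemma is_lim_seq_Series_dominated (t : nat -> nat -> R) (W : nat -> R) :
  (forall K j, 0 <= t K j <= W j) -> ex_series W ->
  (forall j, is_lim_seq (fun K => t K j) 0) ->
  is_lim_seq (fun K => Series (t K)) 0.
Proof.
  intros Ht HW Hlim.
  assert (Hex : forall K, ex_series (t K)).
  { intros K. apply (ex_series_le (K := R_AbsRing) (V := R_CompleteNormedModule) _ W); auto.
    intros j. change (Rabs (t K j) <= W j). rewrite Rabs_pos_eq; apply Ht. }
  assert (Htail : forall N, ex_series (fun k => W (S N + k)%nat))
    by (intros N; now apply ex_series_incr_n).
  assert (Hfin : forall J, is_lim_seq (fun K => sum_n (t K) J) 0).
  { intros J. induction J as [|J IH].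
    - apply is_lim_seq_ext with (fun K => t K 0%nat); [intros; now rewrite sum_O|apply Hlim].
    - apply is_lim_seq_ext with (fun K => sum_n (t K) J + t K (S J)); [intros; now rewrite sum_Sn|].
      pose proof (is_lim_seq_plus' _ _ 0 0 IH (Hlim (S J))) as H.
      rewrite Rplus_0_r in H. exact H. }
  apply is_lim_seq_spec. intros eps.
  assert (He2 : 0 < eps / 2) by (pose proof (cond_pos eps); lra).
  (* a tail of [W] below eps/2 controls all tails of the [t K] *)
  assert (HWl : is_lim_seq (sum_n W) (Series W)) by exact (Series_correct _ HW).
  destruct (proj2 (is_lim_seq_spec _ _) HWl (mkposreal _ He2)) as [J HJ].
  specialize (HJ J (le_n J)). simpl in HJ.
  destruct (proj2 (is_lim_seq_spec _ _) (Hfin J) (mkposreal _ He2)) as [K0 HK0].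
  exists K0. intros K HK. specialize (HK0 K HK). simpl in HK0. rewrite Rminus_0_r in *.
  rewrite (Series_tail (t K) J (Hex K)).
  rewrite (Series_tail W J HW) in HJ.
  assert (Hnn : forall N, 0 <= sum_n (t K) N).
  { intros N. rewrite sum_n_Reals. apply cond_pos_sum. intros; apply Ht. }
  assert (Ht0 : 0 <= Series (fun k => t K (S J + k)%nat)).
  { apply Series_nonneg; [apply ex_series_incr_n, Hex|intros; apply Ht]. }
  assert (Hle : Series (fun k => t K (S J + k)%nat) <= Series (fun k => W (S J + k)%nat)).
  { apply Series_le; [intros; apply Ht|apply Htail]. }
  specialize (Hnn J). rewrite Rabs_pos_eq in HK0 by lra.
  replace (sum_n W J - (sum_n W J + Series (fun k => W (S J + k)%nat)))
    with (- Series (fun k => W (S J + k)%nat)) in HJ by ring.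
  rewrite Rabs_Ropp, Rabs_pos_eq in HJ by lra.
  rewrite Rabs_pos_eq; lra.
Qed.

Lemma is_CSeries_sum_n (a : nat -> nat -> C) (A : nat -> C) K :
  (forall k, is_CSeries (a k) (A k)) ->
  is_CSeries (fun j => sum_n (G := C_AbelianMonoid) (fun k => a k j) K)
             (sum_n (G := C_AbelianMonoid) A K).
Proof.
  intros H. induction K as [|K IH].
  - rewrite sum_O. apply (is_CSeries_ext (a 0%nat)); [intros; now rewrite sum_O|apply H].
  - rewrite sum_Sn.
    apply (is_CSeries_ext (fun j => sum_n (G := C_AbelianMonoid) (fun k => a k j) K + a (S K) j)%C);
      [intros j; now rewrite sum_Sn|].
    now apply is_CSeries_plus.
Qed.

Lemma is_CSeries_remainder_le (a : nat -> C) (w : nat -> R) (l : C) K :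
  (forall k, Cmod (a k) <= w k) -> ex_series w -> is_CSeries a l ->
  Cmod (l - sum_n (G := C_AbelianMonoid) a K)%C <= Series (fun k => w (S K + k)%nat).
Proof.
  intros Hw Hex Hl.
  apply (is_CSeries_Cmod_le (fun k => a (S K + k)%nat) _ (fun k => w (S K + k)%nat));
    [|apply Series_correct, (ex_series_incr_n w (S K)), Hex|auto].
  apply (is_series_incr_n (K := C_AbsRing) (V := C_NormedModule) a (S K)); [lia|]. simpl pred.
  match goal with |- is_series _ ?x => replace x with l; [exact Hl|] end.
  change (l = l - sum_n (G := C_AbelianMonoid) a K + sum_n (G := C_AbelianMonoid) a K)%C. ring.
Qed.

Lemma is_CSeries_swap (a : nat -> nat -> C) (w : nat -> nat -> R) (W : nat -> R)
  (A Col : nat -> C) (L : C) :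
  (forall k j, Cmod (a k j) <= w k j) ->
  (forall j, is_series (fun k => w k j) (W j)) -> ex_series W ->
  (forall k, is_CSeries (a k) (A k)) ->
  (forall j, is_CSeries (fun k => a k j) (Col j)) ->
  is_CSeries Col L -> is_CSeries A L.
Proof.
  intros Hw HW HWex HA HCol HL.
  set (tail := fun K j => Series (fun k => w (S K + k)%nat j)).
  assert (Htail : forall K j, tail K j = W j - sum_n (fun k => w k j) K).
  { intros K j. unfold tail. rewrite <- (is_series_unique _ _ (HW j)).
    rewrite (Series_tail (fun k => w k j) K) by exact (ex_intro _ _ (HW j)). ring. }
  assert (Htail_bd : forall K j, 0 <= tail K j <= W j).
  { intros K j. assert (Hw0 : forall k, 0 <= w k j)
      by (intros k; eapply Rle_trans; [apply Cmod_ge_0|apply Hw]).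
    split.
    - apply Series_nonneg; auto.
      apply (ex_series_incr_n (fun k => w k j) (S K)). exact (ex_intro _ _ (HW j)).
    - rewrite Htail. enough (0 <= sum_n (fun k => w k j) K) by lra.
      rewrite sum_n_Reals. now apply cond_pos_sum. }
  apply Clim_seq_of_bound with (fun K => Series (tail K)).
  - apply is_lim_seq_Series_dominated with W; auto.
    intros j. apply is_lim_seq_ext with (fun K => W j - sum_n (fun k => w k j) K);
      [intros; now rewrite Htail|].
    replace 0 with (W j - W j) by ring.
    apply is_lim_seq_minus'; [apply is_lim_seq_const|exact (HW j)].
  - intros K.
    change (Cmod (sum_n (G := C_AbelianMonoid) A K - L)%C <= Series (tail K)).
    rewrite <- Cmod_opp.
    replace (- (sum_n (G := C_AbelianMonoid) A K - L))%C with (L - sum_n (G := C_AbelianMonoid) A K)%C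
      by ring.
    apply (is_CSeries_Cmod_le (fun j => Col j - sum_n (G := C_AbelianMonoid) (fun k => a k j) K)%C
             _ (tail K)).
    + apply is_CSeries_minus; [exact HL|now apply is_CSeries_sum_n].
    + apply Series_correct, (ex_series_le (K := R_AbsRing) (V := R_CompleteNormedModule) _ W); auto.
      intros j. change (Rabs (tail K j) <= W j). rewrite Rabs_pos_eq; apply Htail_bd.
    + intros j. apply (is_CSeries_remainder_le (fun k => a k j) (fun k => w k j)); auto.
      exact (ex_intro _ _ (HW j)).
Qed.

Lemma is_Cderive_unique (f : C -> C) z l : is_Cderive f z l -> CDeriv f z = l.
Proof.
  intros H. unfold CDeriv.
  pose proof (epsilon_spec (inhabits (RtoC 0)) (is_Cderive f z) (ex_intro _ l H)) as H'.
  now rewrite <- (is_C_derive_unique _ _ _ H), (is_C_derive_unique _ _ _ H').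
Qed.

(* The library's product and identity rules are stated for [AbsRing_NormedModule C_AbsRing]. *)
Lemma is_Cderive_AbsRing (f : C -> C) z l :
  is_Cderive f z l <-> @is_derive C_AbsRing (AbsRing_NormedModule C_AbsRing) f z l.
Proof.
  split; intros [_ H]; (split; [apply is_linear_scal_l|]); intros y Hy e; exact (H y Hy e).
Qed.

Lemma is_Cderive_const (a x : C) : is_Cderive (fun _ => a) x (RtoC 0).
Proof. exact (is_derive_const a x). Qed.

Lemma is_Cderive_id (x : C) : is_Cderive (fun y => y) x (RtoC 1).
Proof. apply is_Cderive_AbsRing. exact (is_derive_id x). Qed.

Lemma is_Cderive_plus (f g : C -> C) x df dg l :
  is_Cderive f x df -> is_Cderive g x dg -> l = (df + dg)%C ->
  is_Cderive (fun y => f y + g y)%C x l.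
Proof. intros Hf Hg ->. exact (is_derive_plus _ _ x _ _ Hf Hg). Qed.

Lemma is_Cderive_minus (f g : C -> C) x df dg l :
  is_Cderive f x df -> is_Cderive g x dg -> l = (df - dg)%C ->
  is_Cderive (fun y => f y - g y)%C x l.
Proof. intros Hf Hg ->. exact (is_derive_minus _ _ x _ _ Hf Hg). Qed.

Lemma is_Cderive_mult (f g : C -> C) x df dg l :
  is_Cderive f x df -> is_Cderive g x dg -> l = (df * g x + f x * dg)%C ->
  is_Cderive (fun y => f y * g y)%C x l.
Proof.
  intros Hf Hg ->. apply is_Cderive_AbsRing.
  apply is_Cderive_AbsRing in Hf, Hg. exact (is_derive_mult _ _ x _ _ Hf Hg Cmult_comm).
Qed.

Lemma is_Cderive_ext_disk (f g : C -> C) x l : Cmod x < 1 ->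
  (forall y, Cmod y < 1 -> f y = g y) -> is_Cderive f x l -> is_Cderive g x l.
Proof.
  intros Hx Hfg. apply is_derive_ext_loc.
  apply (locally_norm_le_locally (K := C_AbsRing) (V := AbsRing_NormedModule C_AbsRing)).
  assert (Hr : 0 < 1 - Cmod x) by lra.
  exists (mkposreal _ Hr). intros y Hy. apply Hfg.
  change (Cmod (y - x)%C < 1 - Cmod x) in Hy.
  replace y with (x + (y - x))%C by ring.
  eapply Rle_lt_trans; [apply Cmod_triangle|lra].
Qed.

Lemma is_Cderive_of_quadratic_remainder (f : C -> C) x l M eps : 0 < eps ->
  (forall y, Cmod (y - x)%C < eps ->
     Cmod (f y - f x - (y - x) * l)%C <= M * Cmod (y - x)%C ^ 2) ->
  is_Cderive f x l.
Proof.
  intros Heps H. split; [apply is_linear_scal_l|].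
  intros x' Hx'.
  apply (is_filter_lim_locally_unique (K := C_AbsRing) (V := AbsRing_NormedModule C_AbsRing)) in Hx'.
  subst x'. intros e.
  apply (locally_norm_le_locally (K := C_AbsRing) (V := AbsRing_NormedModule C_AbsRing)).
  set (M' := Rmax M 0 + 1).
  assert (HM' : 0 < M') by (unfold M'; pose proof (Rmax_r M 0); lra).
  assert (He : 0 < Rmin eps (e / M')).
  { apply Rmin_pos; auto. apply Rdiv_lt_0_compat; auto. apply cond_pos. }
  exists (mkposreal _ He). intros y Hy.
  change (Cmod (y - x)%C < Rmin eps (e / M')) in Hy.
  change (Cmod (f y - f x - (y - x) * l)%C <= e * Cmod (y - x)%C).
  pose proof (Rmin_l eps (e / M')). pose proof (Rmin_r eps (e / M')).
  specialize (H y ltac:(lra)). set (d := Cmod (y - x)%C) in *.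
  assert (Hd : 0 <= d) by apply Cmod_ge_0.
  assert (Hdm : M' * d <= e).
  { assert (Hlt : d < e / M') by lra.
    apply Rlt_le. replace (pos e) with (M' * (e / M')) by (field; lra).
    now apply Rmult_lt_compat_l. }
  assert (M * d ^ 2 <= M' * d * d) by (unfold M'; pose proof (Rmax_l M 0); simpl; nra).
  nra.
Qed.

Definition weight (p : nat) (r : R) (n : nat) : R := INR (S n) ^ p * r ^ n.

Lemma INR_S_ge_1 n : 1 <= INR (S n).
Proof. rewrite S_INR. pose proof (pos_INR n). lra. Qed.

Lemma INR_S_pow_pos n p : 0 < INR (S n) ^ p.
Proof. apply pow_lt. pose proof (INR_S_ge_1 n). lra. Qed.

Lemma INR_S_pow_le_S n p : INR (S n) ^ p <= INR (S n) ^ S p.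
Proof.
  change (INR (S n) ^ S p) with (INR (S n) * INR (S n) ^ p).
  pose proof (INR_S_ge_1 n). pose proof (INR_S_pow_pos n p). nra.
Qed.

Lemma weight_pos p r n : 0 < r -> 0 < weight p r n.
Proof. intros Hr. apply Rmult_lt_0_compat; [apply INR_S_pow_pos|now apply pow_lt]. Qed.

Lemma ex_series_weight p r : 0 < r < 1 -> ex_series (weight p r).
Proof.
  intros Hr.
  assert (Hpos : forall n, 0 < weight p r n) by (intros; apply weight_pos; lra).
  apply ex_series_ext with (fun n => Rabs (weight p r n));
    [intros n; apply Rabs_pos_eq, Rlt_le, Hpos|].
  apply ex_series_DAlembert with r; [lra|intros n; apply Rgt_not_eq, Hpos|].
  (* the ratio of consecutive terms is (1 + 1/(n+1))^p r *)
  apply is_lim_seq_ext with (fun n => (1 + / INR (S n)) ^ p * r).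
  { intros n. assert (HS : 0 < INR (S n)) by (apply lt_0_INR; lia).
    rewrite Rabs_pos_eq by (apply Rlt_le, Rdiv_lt_0_compat; apply Hpos).
    unfold weight. rewrite (S_INR (S n)).
    replace (INR (S n) + 1) with ((1 + / INR (S n)) * INR (S n)) by (field; lra).
    rewrite Rpow_mult_distr. simpl pow at 4.
    field. split; apply Rgt_not_eq, pow_lt; lra. }
  assert (Hinv : is_lim_seq (fun n => 1 + / INR (S n)) 1).
  { pose proof (is_lim_seq_inv _ _ (proj1 (is_lim_seq_incr_1 INR p_infty) is_lim_seq_INR)
                                 ltac:(discriminate)) as H0.
    pose proof (is_lim_seq_plus' _ _ 1 0 (is_lim_seq_const 1) H0) as H.
    rewrite Rplus_0_r in H. exact H. }
  assert (Hpow : forall k, is_lim_seq (fun n => (1 + / INR (S n)) ^ k) 1).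
  { induction k as [|k IH]; [apply is_lim_seq_const|].
    pose proof (is_lim_seq_mult' _ _ _ _ Hinv IH) as H. rewrite Rmult_1_l in H. exact H. }
  pose proof (is_lim_seq_mult' _ _ _ _ (Hpow p) (is_lim_seq_const r)) as H.
  rewrite Rmult_1_l in H. exact H.
Qed.

Lemma Series_weight_nonneg p r : 0 < r < 1 -> 0 <= Series (weight p r).
Proof.
  intros Hr. apply Series_nonneg; [now apply ex_series_weight|].
  intros n. apply Rlt_le, weight_pos. lra.
Qed.

Definition CSeries2 (a : nat -> nat -> C) : C := CSeries (fun n => CSeries (a n)).

Lemma CSeries2_ext a b : (forall n m, a n m = b n m) -> CSeries2 a = CSeries2 b.
Proof. intros H. apply CSeries_ext. intros n. now apply CSeries_ext. Qed.

Definition weight_bounded (a : nat -> nat -> C) (K : R) (p : nat) (r : R) : Prop :=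
  forall n m, Cmod (a n m) <= K * weight p r n * weight p r m.

Section WeightBounded.
Variables (p : nat) (r : R).
Hypothesis Hr : 0 < r < 1.

Lemma is_CSeries_row a K : weight_bounded a K p r -> forall n, is_CSeries (a n) (CSeries (a n)).
Proof.
  intros Hb n. apply (CSeries_correct_le _ (fun m => K * weight p r n * weight p r m)); [apply Hb|].
  exact (ex_series_scal_l (K * weight p r n) _ (ex_series_weight p r Hr)).
Qed.

Lemma Cmod_CSeries_row_le a K : weight_bounded a K p r ->
  forall n, Cmod (CSeries (a n)) <= K * weight p r n * Series (weight p r).
Proof.
  intros Hb n. apply (is_CSeries_Cmod_le (a n) _ (fun m => K * weight p r n * weight p r m));
    [exact (is_CSeries_row a K Hb n)| |apply Hb].
  exact (is_series_scal_l (K * weight p r n) _ _ (Series_correct _ (ex_series_weight p r Hr))).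
Qed.

Lemma is_CSeries2 a K : weight_bounded a K p r ->
  is_CSeries (fun n => CSeries (a n)) (CSeries2 a).
Proof.
  intros Hb. apply (CSeries_correct_le _ (fun n => K * Series (weight p r) * weight p r n)).
  - intros n. pose proof (Cmod_CSeries_row_le a K Hb n). lra.
  - exact (ex_series_scal_l (K * Series (weight p r)) _ (ex_series_weight p r Hr)).
Qed.

Lemma Cmod_CSeries2_le a K : weight_bounded a K p r ->
  Cmod (CSeries2 a) <= K * Series (weight p r) * Series (weight p r).
Proof.
  intros Hb.
  apply (is_CSeries_Cmod_le (fun n => CSeries (a n)) _ (fun n => K * Series (weight p r) * weight p r n)).
  - now apply (is_CSeries2 a K).
  - exact (is_series_scal_l (K * Series (weight p r)) _ _ (Series_correct _ (ex_series_weight p r Hr))).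
  - intros n. pose proof (Cmod_CSeries_row_le a K Hb n). lra.
Qed.

Lemma CSeries2_plus a b K1 K2 : weight_bounded a K1 p r -> weight_bounded b K2 p r ->
  CSeries2 (fun n m => a n m + b n m)%C = (CSeries2 a + CSeries2 b)%C.
Proof.
  intros Ha Hb. unfold CSeries2 at 1.
  rewrite (CSeries_ext _ (fun n => CSeries (a n) + CSeries (b n))%C).
  - apply is_CSeries_unique, is_CSeries_plus; [apply (is_CSeries2 a K1)|apply (is_CSeries2 b K2)]; auto.
  - intros n. apply is_CSeries_unique, is_CSeries_plus;
      [apply (is_CSeries_row a K1)|apply (is_CSeries_row b K2)]; auto.
Qed.

Lemma CSeries2_minus a b K1 K2 : weight_bounded a K1 p r -> weight_bounded b K2 p r ->
  CSeries2 (fun n m => a n m - b n m)%C = (CSeries2 a - CSeries2 b)%C.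
Proof.
  intros Ha Hb. unfold CSeries2 at 1.
  rewrite (CSeries_ext _ (fun n => CSeries (a n) - CSeries (b n))%C).
  - apply is_CSeries_unique, is_CSeries_minus; [apply (is_CSeries2 a K1)|apply (is_CSeries2 b K2)]; auto.
  - intros n. apply is_CSeries_unique, is_CSeries_minus;
      [apply (is_CSeries_row a K1)|apply (is_CSeries_row b K2)]; auto.
Qed.

Lemma CSeries2_scal c a K : weight_bounded a K p r ->
  CSeries2 (fun n m => c * a n m)%C = (c * CSeries2 a)%C.
Proof.
  intros Ha. unfold CSeries2 at 1.
  rewrite (CSeries_ext _ (fun n => c * CSeries (a n))%C).
  - apply is_CSeries_unique, is_CSeries_scal, (is_CSeries2 a K), Ha.
  - intros n. apply is_CSeries_unique, is_CSeries_scal, (is_CSeries_row a K), Ha.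
Qed.

Lemma CSeries2_shift_n a K : (forall m, a 0%nat m = RtoC 0) ->
  weight_bounded (fun n m => a (S n) m) K p r -> CSeries2 a = CSeries2 (fun n m => a (S n) m).
Proof.
  intros H0 Hb. apply is_CSeries_unique, is_CSeries_decr_1; [exact (is_CSeries2 _ _ Hb)|].
  rewrite (CSeries_ext _ _ H0). apply is_CSeries_unique, is_CSeries_zero.
Qed.

Lemma CSeries2_shift_m a K : (forall n, a n 0%nat = RtoC 0) ->
  weight_bounded (fun n m => a n (S m)) K p r -> CSeries2 a = CSeries2 (fun n m => a n (S m)).
Proof.
  intros H0 Hb. apply CSeries_ext. intros n.
  apply is_CSeries_unique, is_CSeries_decr_1; [exact (is_CSeries_row _ _ Hb n)|apply H0].
Qed.

Lemma weight_bounded_mono a K p' : (p <= p')%nat -> 0 <= K ->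
  weight_bounded a K p r -> weight_bounded a K p' r.
Proof.
  intros Hp HK H n m. eapply Rle_trans; [apply H|].
  assert (Hw : forall k, 0 < weight p r k <= weight p' r k).
  { intros k. split; [apply weight_pos; lra|].
    apply Rmult_le_compat_r; [apply pow_le; lra|].
    apply Rle_pow; [apply INR_S_ge_1|exact Hp]. }
  pose proof (Hw n). pose proof (Hw m).
  rewrite !Rmult_assoc. apply Rmult_le_compat_l; [exact HK|].
  apply Rmult_le_compat; lra.
Qed.

Lemma weight_bounded_scal a K z : weight_bounded a K p r ->
  weight_bounded (fun n m => z * a n m)%C (Cmod z * K) p r.
Proof.
  intros H n m. rewrite Cmod_mult, !Rmult_assoc.
  apply Rmult_le_compat_l; [apply Cmod_ge_0|]. rewrite <- !Rmult_assoc. apply H.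
Qed.

Lemma weight_bounded_minus a b K1 K2 : weight_bounded a K1 p r -> weight_bounded b K2 p r ->
  weight_bounded (fun n m => a n m - b n m)%C (K1 + K2) p r.
Proof.
  intros Ha Hb n m. unfold Cminus. eapply Rle_trans; [apply Cmod_triangle|].
  rewrite Cmod_opp. specialize (Ha n m). specialize (Hb n m). lra.
Qed.

End WeightBounded.

Definition poly_bounded (c : nat -> nat -> C) (K : R) (p : nat) : Prop :=
  0 <= K /\ forall n m, Cmod (c n m) <= K * INR (S n) ^ p * INR (S m) ^ p.

Definition pseries2 (c : nat -> nat -> C) (u v : C) : C :=
  CSeries2 (fun n m => c n m * (u ^ n * v ^ m))%C.
Definition pseries2_du (c : nat -> nat -> C) (u v : C) : C :=
  CSeries2 (fun n m => c n m * (INR n * u ^ pred n * v ^ m))%C.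
Definition pseries2_dv (c : nat -> nat -> C) (u v : C) : C :=
  CSeries2 (fun n m => c n m * (u ^ n * (INR m * v ^ pred m)))%C.

Lemma Cmod_Cpow_le x r n : Cmod x <= r -> Cmod (x ^ n)%C <= r ^ n.
Proof. intros H. rewrite Cmod_pow. apply pow_incr. split; auto. apply Cmod_ge_0. Qed.

Lemma Cmod_Cpow_pred_le x r n : 0 < r <= 1 -> Cmod x <= r -> r * Cmod (x ^ pred n)%C <= r ^ n.
Proof.
  intros Hr Hx. destruct n as [|n]; simpl.
  - rewrite Cmod_1. lra.
  - apply Rmult_le_compat_l; [lra|now apply Cmod_Cpow_le].
Qed.

Lemma Cmod_monomial_deriv_le x r n : 0 < r <= 1 -> Cmod x <= r ->
  INR n * Cmod (x ^ pred n)%C <= INR (S n) * r ^ n / r.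
Proof.
  intros Hr Hx. pose proof (Cmod_Cpow_pred_le x r n Hr Hx). pose proof (pos_INR n).
  assert (INR n <= INR (S n)) by (rewrite S_INR; lra).
  apply Rmult_le_reg_l with r; [lra|].
  replace (r * (INR (S n) * r ^ n / r)) with (INR (S n) * r ^ n) by (field; lra).
  replace (r * (INR n * Cmod (x ^ pred n)%C)) with (INR n * (r * Cmod (x ^ pred n)%C)) by ring.
  apply Rmult_le_compat; auto. apply Rmult_le_pos; [lra|apply Cmod_ge_0].
Qed.

Lemma weight_bounded_pseries2_terms c K p r u v : poly_bounded c K p -> 0 < r ->
  Cmod u <= r -> Cmod v <= r ->
  weight_bounded (fun n m => c n m * (u ^ n * v ^ m))%C K p r.
Proof.
  intros [HK Hc] Hr Hu Hv n m. unfold weight.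
  rewrite !Cmod_mult. pose proof (Cmod_Cpow_le u r n Hu). pose proof (Cmod_Cpow_le v r m Hv).
  pose proof (Hc n m). pose proof (INR_S_pow_pos n p). pose proof (INR_S_pow_pos m p).
  pose proof (Cmod_ge_0 (c n m)). pose proof (Cmod_ge_0 (u ^ n)%C). pose proof (Cmod_ge_0 (v ^ m)%C).
  replace (K * (INR (S n) ^ p * r ^ n) * (INR (S m) ^ p * r ^ m))
    with ((K * INR (S n) ^ p * INR (S m) ^ p) * (r ^ n * r ^ m)) by ring.
  apply Rmult_le_compat; auto; [apply Rmult_le_pos; auto|apply Rmult_le_compat; auto].
Qed.

Lemma weight_bounded_pseries2_du_terms c K p r u v : poly_bounded c K p -> 0 < r <= 1 ->
  Cmod u <= r -> Cmod v <= r ->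
  weight_bounded (fun n m => c n m * (INR n * u ^ pred n * v ^ m))%C (K / r) (S p) r.
Proof.
  intros [HK Hc] Hr Hu Hv n m. unfold weight.
  rewrite !Cmod_mult, Cmod_R, Rabs_pos_eq by apply pos_INR.
  pose proof (Cmod_monomial_deriv_le u r n Hr Hu). pose proof (Cmod_Cpow_le v r m Hv).
  pose proof (Hc n m). pose proof (INR_S_pow_pos n p). pose proof (INR_S_pow_pos m p).
  pose proof (INR_S_pow_le_S m p). pose proof (pos_INR n).
  pose proof (Cmod_ge_0 (c n m)). pose proof (Cmod_ge_0 (u ^ pred n)%C). pose proof (Cmod_ge_0 (v ^ m)%C).
  replace (K / r * (INR (S n) ^ S p * r ^ n) * (INR (S m) ^ S p * r ^ m))
    with ((K * INR (S n) ^ p * INR (S m) ^ S p) * ((INR (S n) * r ^ n / r) * r ^ m))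
    by (rewrite <- !tech_pow_Rmult; field; lra).
  apply Rmult_le_compat; auto.
  - apply Rmult_le_pos; auto. apply Rmult_le_pos; auto.
  - eapply Rle_trans; [eassumption|]. apply Rmult_le_compat_l; [apply Rmult_le_pos|]; auto; lra.
  - apply Rmult_le_compat; auto. apply Rmult_le_pos; auto.
Qed.

Lemma weight_bounded_pseries2_dv_terms c K p r u v : poly_bounded c K p -> 0 < r <= 1 ->
  Cmod u <= r -> Cmod v <= r ->
  weight_bounded (fun n m => c n m * (u ^ n * (INR m * v ^ pred m)))%C (K / r) (S p) r.
Proof.
  intros [HK Hc] Hr Hu Hv n m. unfold weight.
  rewrite !Cmod_mult, Cmod_R, Rabs_pos_eq by apply pos_INR.
  pose proof (Cmod_monomial_deriv_le v r m Hr Hv). pose proof (Cmod_Cpow_le u r n Hu).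
  pose proof (Hc n m). pose proof (INR_S_pow_pos n p). pose proof (INR_S_pow_pos m p).
  pose proof (INR_S_pow_le_S n p). pose proof (pos_INR m).
  pose proof (Cmod_ge_0 (c n m)). pose proof (Cmod_ge_0 (v ^ pred m)%C). pose proof (Cmod_ge_0 (u ^ n)%C).
  replace (K / r * (INR (S n) ^ S p * r ^ n) * (INR (S m) ^ S p * r ^ m))
    with ((K * INR (S n) ^ S p * INR (S m) ^ p) * (r ^ n * (INR (S m) * r ^ m / r)))
    by (rewrite <- !tech_pow_Rmult; field; lra).
  apply Rmult_le_compat; auto.
  - apply Rmult_le_pos; auto. apply Rmult_le_pos; auto.
  - eapply Rle_trans; [eassumption|]. apply Rmult_le_compat_r; [lra|].
    apply Rmult_le_compat_l; auto.
  - apply Rmult_le_compat; auto. apply Rmult_le_pos; auto.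
Qed.

Lemma Cpow_sub_bound x y r n : 0 < r -> Cmod x <= r -> Cmod y <= r ->
  r * Cmod (y ^ n - x ^ n)%C <= INR n * r ^ n * Cmod (y - x)%C.
Proof.
  intros Hr Hx Hy. induction n as [|n IH].
  - replace (y ^ 0 - x ^ 0)%C with (RtoC 0) by (simpl; ring). rewrite Cmod_0. simpl. lra.
  - assert (T : Cmod (y ^ S n - x ^ S n)%C
                <= Cmod y * Cmod (y ^ n - x ^ n)%C + Cmod (x ^ n)%C * Cmod (y - x)%C).
    { replace (y ^ S n - x ^ S n)%C with (y * (y ^ n - x ^ n) + x ^ n * (y - x))%C by (simpl; ring).
      rewrite <- !Cmod_mult. apply Cmod_triangle. }
    pose proof (Cmod_Cpow_le x r n Hx). pose proof (Cmod_ge_0 y).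
    pose proof (Cmod_ge_0 (y - x)%C). pose proof (Cmod_ge_0 (x ^ n)%C).
    assert (A1 : Cmod y * (r * Cmod (y ^ n - x ^ n)%C) <= r * (INR n * r ^ n * Cmod (y - x)%C)).
    { apply Rmult_le_compat; auto. apply Rmult_le_pos; [lra|apply Cmod_ge_0]. }
    assert (A2 : Cmod (x ^ n)%C * Cmod (y - x)%C <= r ^ n * Cmod (y - x)%C)
      by (apply Rmult_le_compat_r; auto).
    rewrite S_INR. simpl pow. nra.
Qed.

Lemma INR_Cpow_pred x n : (INR n * x ^ n)%C = (INR n * x * x ^ pred n)%C.
Proof. destruct n; simpl; ring. Qed.

Lemma Cpow_taylor_bound x y r n : 0 < r <= 1 -> Cmod x <= r -> Cmod y <= r ->
  r ^ 2 * Cmod (y ^ n - x ^ n - INR n * x ^ pred n * (y - x))%C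
  <= INR n ^ 2 * r ^ n * Cmod (y - x)%C ^ 2.
Proof.
  intros Hr Hx Hy. induction n as [|n IH].
  - replace (y ^ 0 - x ^ 0 - INR 0 * x ^ pred 0 * (y - x))%C with (RtoC 0) by (simpl; ring).
    rewrite Cmod_0. simpl. lra.
  - set (R0 := (y ^ n - x ^ n - INR n * x ^ pred n * (y - x))%C) in *.
    set (h := Cmod (y - x)%C).
    assert (T : Cmod (y ^ S n - x ^ S n - INR (S n) * x ^ pred (S n) * (y - x))%C
                <= Cmod y * Cmod R0 + INR n * Cmod (x ^ pred n)%C * (h * h)).
    { replace (y ^ S n - x ^ S n - INR (S n) * x ^ pred (S n) * (y - x))%C
        with (y * R0 + INR n * x ^ pred n * ((y - x) * (y - x)))%C.
      - eapply Rle_trans; [apply Cmod_triangle|].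
        rewrite !Cmod_mult, Cmod_R, Rabs_pos_eq by apply pos_INR. unfold h. lra.
      - unfold R0. simpl pred. rewrite S_INR, RtoC_plus.
        transitivity (y ^ S n - x ^ S n - (INR n * x ^ n) * (y - x) - x ^ n * (y - x))%C; [|ring].
        rewrite INR_Cpow_pred. simpl. ring. }
    pose proof (Cmod_Cpow_pred_le x r n Hr Hx). pose proof (Cmod_ge_0 y). pose proof (Cmod_ge_0 R0).
    assert (Hh : 0 <= h) by apply Cmod_ge_0.
    pose proof (pos_INR n). pose proof (Cmod_ge_0 (x ^ pred n)%C). pose proof (pow_le r n ltac:(lra)).
    assert (A1 : Cmod y * (r ^ 2 * Cmod R0) <= r * (INR n ^ 2 * r ^ n * h ^ 2))
      by (apply Rmult_le_compat; auto; apply Rmult_le_pos; [apply pow_le; lra|auto]).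
    assert (A2 : r ^ 2 * (INR n * Cmod (x ^ pred n)%C * (h * h)) <= r * (INR n * r ^ n * h ^ 2)).
    { replace (r ^ 2 * (INR n * Cmod (x ^ pred n)%C * (h * h)))
        with (r * (INR n * (r * Cmod (x ^ pred n)%C) * h ^ 2)) by ring.
      apply Rmult_le_compat_l; [lra|]. apply Rmult_le_compat_r; [apply pow2_ge_0|].
      apply Rmult_le_compat_l; auto. }
    assert (0 <= r * r ^ n * h * h) by (repeat apply Rmult_le_pos; lra).
    apply (Rmult_le_compat_l (r ^ 2)) in T; [|apply pow_le; lra].
    replace (INR (S n) ^ 2) with ((INR n + 1) ^ 2) by (rewrite S_INR; ring). simpl pow in *. nra.
Qed.

Lemma quadratic_form_le N M a b : 0 <= N -> 0 <= M -> 0 <= a -> 0 <= b ->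
  N ^ 2 * a ^ 2 + N * a * (M * b) + M ^ 2 * b ^ 2 <= (N + 1) ^ 2 * (M + 1) ^ 2 * (a + b) ^ 2.
Proof.
  intros HN HM Ha Hb.
  set (Q := (N + 1) ^ 2 * (M + 1) ^ 2).
  assert (N ^ 2 <= Q /\ M ^ 2 <= Q /\ N * M <= Q) as (P1 & P2 & P3) by (unfold Q; repeat split; nra).
  assert (N ^ 2 * a ^ 2 <= Q * a ^ 2) by (apply Rmult_le_compat_r; nra).
  assert (M ^ 2 * b ^ 2 <= Q * b ^ 2) by (apply Rmult_le_compat_r; nra).
  assert (N * M * (a * b) <= Q * (a * b)) by (apply Rmult_le_compat_r; nra).
  assert (0 <= Q * (a * b)) by (apply Rmult_le_pos; nra).
  nra.
Qed.

Definition monomial2_remainder (x y x' y' : C) (n m : nat) : C :=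
  (y ^ n * y' ^ m - x ^ n * x' ^ m - (y - x) * (INR n * x ^ pred n * x' ^ m)
   - (y' - x') * (x ^ n * (INR m * x' ^ pred m)))%C.

Lemma Cmod_monomial2_remainder_le x y x' y' r n m : 0 < r <= 1 ->
  Cmod x <= r -> Cmod y <= r -> Cmod x' <= r -> Cmod y' <= r ->
  r ^ 2 * Cmod (monomial2_remainder x y x' y' n m) <=
  (INR n ^ 2 * Cmod (y - x)%C ^ 2 + INR n * Cmod (y - x)%C * (INR m * Cmod (y' - x')%C)
   + INR m ^ 2 * Cmod (y' - x')%C ^ 2) * (r ^ n * r ^ m).
Proof.
  intros Hr Hx Hy Hx' Hy'.
  set (Rn := (y ^ n - x ^ n - INR n * x ^ pred n * (y - x))%C).
  set (Rm := (y' ^ m - x' ^ m - INR m * x' ^ pred m * (y' - x'))%C).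
  replace (monomial2_remainder x y x' y' n m)
    with (Rn * y' ^ m + INR n * x ^ pred n * (y - x) * (y' ^ m - x' ^ m) + x ^ n * Rm)%C
    by (unfold monomial2_remainder, Rn, Rm; ring).
  pose proof (Cpow_taylor_bound x y r n Hr Hx Hy) as B1. fold Rn in B1.
  pose proof (Cpow_taylor_bound x' y' r m Hr Hx' Hy') as B2. fold Rm in B2.
  pose proof (Cpow_sub_bound x' y' r m ltac:(lra) Hx' Hy') as B3.
  pose proof (Cmod_Cpow_pred_le x r n Hr Hx) as B4.
  pose proof (Cmod_Cpow_le y' r m Hy') as B5. pose proof (Cmod_Cpow_le x r n Hx) as B6.
  set (h := Cmod (y - x)%C) in *. set (k := Cmod (y' - x')%C) in *.
  pose proof (Cmod_ge_0 (y - x)%C). pose proof (Cmod_ge_0 (y' - x')%C).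
  pose proof (Cmod_ge_0 Rn). pose proof (Cmod_ge_0 Rm). pose proof (Cmod_ge_0 (y' ^ m)%C).
  pose proof (Cmod_ge_0 (x ^ n)%C). pose proof (Cmod_ge_0 (x ^ pred n)%C).
  pose proof (Cmod_ge_0 (y' ^ m - x' ^ m)%C). pose proof (pos_INR n). pose proof (pos_INR m).
  pose proof (pow_le r n ltac:(lra)). pose proof (pow_le r m ltac:(lra)).
  pose proof (pow_le r 2 ltac:(lra)).
  assert (C1 : (r ^ 2 * Cmod Rn) * Cmod (y' ^ m)%C <= (INR n ^ 2 * r ^ n * h ^ 2) * r ^ m)
    by (apply Rmult_le_compat; auto; apply Rmult_le_pos; auto).
  assert (C2 : (INR n * h) * ((r * Cmod (x ^ pred n)%C) * (r * Cmod (y' ^ m - x' ^ m)%C)) <=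
               (INR n * h) * (r ^ n * (INR m * r ^ m * k))).
  { apply Rmult_le_compat_l; [apply Rmult_le_pos; auto|].
    apply Rmult_le_compat; auto; apply Rmult_le_pos; lra. }
  assert (C3 : Cmod (x ^ n)%C * (r ^ 2 * Cmod Rm) <= r ^ n * (INR m ^ 2 * r ^ m * k ^ 2))
    by (apply Rmult_le_compat; auto; apply Rmult_le_pos; auto).
  assert (T : Cmod (Rn * y' ^ m + INR n * x ^ pred n * (y - x) * (y' ^ m - x' ^ m) + x ^ n * Rm)%C <=
     Cmod Rn * Cmod (y' ^ m)%C + INR n * Cmod (x ^ pred n)%C * h * Cmod (y' ^ m - x' ^ m)%C
     + Cmod (x ^ n)%C * Cmod Rm).
  { eapply Rle_trans; [apply Cmod_triangle|]. rewrite Cmod_mult.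
    eapply Rle_trans; [apply Rplus_le_compat_r, Cmod_triangle|].
    rewrite !Cmod_mult, Cmod_R, Rabs_pos_eq by apply pos_INR. fold h. lra. }
  apply (Rmult_le_compat_l (r ^ 2)) in T; [|auto]. nra.
Qed.

Lemma monomial2_taylor_bound x y x' y' r n m : 0 < r <= 1 ->
  Cmod x <= r -> Cmod y <= r -> Cmod x' <= r -> Cmod y' <= r ->
  r ^ 2 * Cmod (monomial2_remainder x y x' y' n m)
  <= INR (S n) ^ 2 * INR (S m) ^ 2 * (r ^ n * r ^ m) * (Cmod (y - x)%C + Cmod (y' - x')%C) ^ 2.
Proof.
  intros Hr Hx Hy Hx' Hy'.
  eapply Rle_trans; [now apply Cmod_monomial2_remainder_le|].
  match goal with |- _ <= ?N * ?M * ?R * ?D => replace (N * M * R * D) with (N * M * D * R) by ring end.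
  apply Rmult_le_compat_r; [apply Rmult_le_pos; apply pow_le; lra|].
  rewrite !S_INR. apply quadratic_form_le; auto using pos_INR, Cmod_ge_0.
Qed.

Lemma weight_bounded_pseries2_remainder c K p r x y x' y' : poly_bounded c K p -> 0 < r <= 1 ->
  Cmod x <= r -> Cmod y <= r -> Cmod x' <= r -> Cmod y' <= r ->
  weight_bounded (fun n m => c n m * monomial2_remainder x y x' y' n m)%C
    (K / r ^ 2 * (Cmod (y - x)%C + Cmod (y' - x')%C) ^ 2) (S (S p)) r.
Proof.
  intros [HK Hc] Hr Hx Hy Hx' Hy' n m.
  pose proof (monomial2_taylor_bound x y x' y' r n m Hr Hx Hy Hx' Hy') as TB.
  set (d := (Cmod (y - x)%C + Cmod (y' - x')%C) ^ 2) in *.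
  set (T := Cmod (monomial2_remainder x y x' y' n m)) in *.
  assert (HT : T <= INR (S n) ^ 2 * INR (S m) ^ 2 * (r ^ n * r ^ m) * d / r ^ 2).
  { apply Rmult_le_reg_l with (r ^ 2); [apply pow_lt; lra|].
    replace (r ^ 2 * (INR (S n) ^ 2 * INR (S m) ^ 2 * (r ^ n * r ^ m) * d / r ^ 2))
      with (INR (S n) ^ 2 * INR (S m) ^ 2 * (r ^ n * r ^ m) * d) by (field; lra).
    exact TB. }
  rewrite Cmod_mult. fold T. unfold weight.
  replace (K / r ^ 2 * d * (INR (S n) ^ S (S p) * r ^ n) * (INR (S m) ^ S (S p) * r ^ m))
    with ((K * INR (S n) ^ p * INR (S m) ^ p)
          * (INR (S n) ^ 2 * INR (S m) ^ 2 * (r ^ n * r ^ m) * d / r ^ 2))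
    by (replace (S (S p)) with (p + 2)%nat by lia; rewrite !pow_add; field; lra).
  apply Rmult_le_compat; [apply Cmod_ge_0|apply Cmod_ge_0|apply Hc|exact HT].
Qed.

Lemma pseries2_sub_linear c K p r x y x' y' : poly_bounded c K p -> 0 < r < 1 ->
  Cmod x <= r -> Cmod y <= r -> Cmod x' <= r -> Cmod y' <= r ->
  (pseries2 c y y' - pseries2 c x x' - (y - x) * pseries2_du c x x' - (y' - x') * pseries2_dv c x x')%C
  = CSeries2 (fun n m => c n m * monomial2_remainder x y x' y' n m)%C.
Proof.
  intros Hc Hr Hx Hy Hx' Hy'.
  pose proof (proj1 Hc) as HK.
  pose proof (weight_bounded_pseries2_terms c K p r y y' Hc ltac:(lra) Hy Hy') as bA.
  pose proof (weight_bounded_pseries2_terms c K p r x x' Hc ltac:(lra) Hx Hx') as bB.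
  apply (weight_bounded_mono p r Hr _ K (S p)) in bA, bB; auto.
  pose proof (weight_bounded_pseries2_du_terms c K p r x x' Hc ltac:(lra) Hx Hx') as bU.
  pose proof (weight_bounded_pseries2_dv_terms c K p r x x' Hc ltac:(lra) Hx Hx') as bV.
  pose proof (weight_bounded_minus _ r _ _ _ _ bA bB) as bAB.
  pose proof (weight_bounded_minus _ r _ _ _ _ bAB (weight_bounded_scal _ r _ _ (y - x)%C bU)) as bABU.
  unfold pseries2, pseries2_du, pseries2_dv.
  rewrite <- (CSeries2_scal _ r Hr (y - x)%C _ _ bU), <- (CSeries2_scal _ r Hr (y' - x')%C _ _ bV).
  rewrite <- (CSeries2_minus _ r Hr _ _ _ _ bA bB).
  rewrite <- (CSeries2_minus _ r Hr _ _ _ _ bAB (weight_bounded_scal _ r _ _ (y - x)%C bU)).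
  rewrite <- (CSeries2_minus _ r Hr _ _ _ _ bABU (weight_bounded_scal _ r _ _ (y' - x')%C bV)).
  apply CSeries2_ext. intros n m. unfold monomial2_remainder. ring.
Qed.

Lemma pseries2_taylor_bound c K p r x y x' y' : poly_bounded c K p -> 0 < r < 1 ->
  Cmod x <= r -> Cmod y <= r -> Cmod x' <= r -> Cmod y' <= r ->
  Cmod (pseries2 c y y' - pseries2 c x x' - (y - x) * pseries2_du c x x'
        - (y' - x') * pseries2_dv c x x')%C
  <= K / r ^ 2 * (Cmod (y - x)%C + Cmod (y' - x')%C) ^ 2
     * Series (weight (S (S p)) r) * Series (weight (S (S p)) r).
Proof.
  intros Hc Hr Hx Hy Hx' Hy'.
  rewrite (pseries2_sub_linear c K p r) by assumption.
  apply (Cmod_CSeries2_le _ _ Hr).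
  apply weight_bounded_pseries2_remainder; auto. lra.
Qed.

Lemma Cmod_affine_le (al be x0 y : C) r :
  Cmod (al * x0 + be)%C + Cmod al * Cmod (y - x0)%C <= r -> Cmod (al * y + be)%C <= r.
Proof.
  intros H. replace (al * y + be)%C with ((al * x0 + be) + al * (y - x0))%C by ring.
  eapply Rle_trans; [apply Cmod_triangle|]. rewrite Cmod_mult. exact H.
Qed.

Lemma is_Cderive_pseries2_affine c K p (f : C -> C) (al be ga de x0 u v : C) :
  poly_bounded c K p -> Cmod u < 1 -> Cmod v < 1 ->
  u = (al * x0 + be)%C -> v = (ga * x0 + de)%C ->
  (forall x, f x = pseries2 c (al * x + be) (ga * x + de))%C ->
  is_Cderive f x0 (al * pseries2_du c u v + ga * pseries2_dv c u v)%C.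
Proof.
  intros Hc Hu Hv -> -> Hf.
  apply (is_derive_ext (fun x => pseries2 c (al * x + be) (ga * x + de))%C); [intros; now rewrite Hf|].
  pose proof (Rmax_l (Cmod (al * x0 + be)%C) (Cmod (ga * x0 + de)%C)).
  pose proof (Rmax_r (Cmod (al * x0 + be)%C) (Cmod (ga * x0 + de)%C)).
  set (mx := Rmax (Cmod (al * x0 + be)%C) (Cmod (ga * x0 + de)%C)) in *.
  assert (Hmx : mx < 1) by (apply Rmax_lub_lt; auto).
  pose proof (Cmod_ge_0 (al * x0 + be)%C). pose proof (Cmod_ge_0 al). pose proof (Cmod_ge_0 ga).
  set (r := (1 + mx) / 2). assert (Hr : 0 < r < 1) by (unfold r; lra).
  set (A := Cmod al + Cmod ga + 1). assert (HA : 0 < A) by (unfold A; lra).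
  set (W := Series (weight (S (S p)) r)). pose proof (Series_weight_nonneg (S (S p)) r Hr).
  assert (HK : 0 <= K / r ^ 2) by (apply Rdiv_le_0_compat; [apply Hc|apply pow_lt; lra]).
  apply is_Cderive_of_quadratic_remainder with (M := K / r ^ 2 * W * W * A ^ 2) (eps := (r - mx) / A);
    [apply Rdiv_lt_0_compat; unfold r; lra|].
  intros y Hy. set (d := Cmod (y - x0)%C) in *. assert (Hd : 0 <= d) by apply Cmod_ge_0.
  assert (HdA : A * d < r - mx).
  { apply (Rmult_lt_compat_l A) in Hy; [|exact HA].
    replace (A * ((r - mx) / A)) with (r - mx) in Hy by (field; lra). exact Hy. }
  assert (Hdu : Cmod (al * y + be - (al * x0 + be))%C = Cmod al * d)
    by (unfold d; rewrite <- Cmod_mult; f_equal; ring).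
  assert (Hdv : Cmod (ga * y + de - (ga * x0 + de))%C = Cmod ga * d)
    by (unfold d; rewrite <- Cmod_mult; f_equal; ring).
  pose proof (pseries2_taylor_bound c K p r (al * x0 + be)%C (al * y + be)%C
    (ga * x0 + de)%C (ga * y + de)%C Hc Hr ltac:(unfold r; lra)
    (Cmod_affine_le al be x0 y r ltac:(unfold A in HdA; fold d; nra)) ltac:(unfold r; lra)
    (Cmod_affine_le ga de x0 y r ltac:(unfold A in HdA; fold d; nra))) as T.
  rewrite Hdu, Hdv in T. fold W in T.
  match goal with |- Cmod ?lhs <= _ => replace lhs with
    (pseries2 c (al * y + be) (ga * y + de) - pseries2 c (al * x0 + be) (ga * x0 + de)
     - (al * y + be - (al * x0 + be)) * pseries2_du c (al * x0 + be) (ga * x0 + de)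
     - (ga * y + de - (ga * x0 + de)) * pseries2_dv c (al * x0 + be) (ga * x0 + de))%C by ring end.
  eapply Rle_trans; [exact T|].
  assert ((Cmod al * d + Cmod ga * d) ^ 2 <= A ^ 2 * d ^ 2)
    by (rewrite <- Rpow_mult_distr; apply pow_incr; unfold A; split; nra).
  assert (0 <= W * W) by nra.
  replace (K / r ^ 2 * W * W * A ^ 2 * d ^ 2) with (K / r ^ 2 * (A ^ 2 * d ^ 2) * (W * W)) by ring.
  rewrite Rmult_assoc. apply Rmult_le_compat_r; [lra|]. apply Rmult_le_compat_l; assumption.
Qed.

Definition shift_u (c : nat -> nat -> C) (n m : nat) : C :=
  match n with O => RtoC 0 | S n' => c n' m end.
Definition shift_v (c : nat -> nat -> C) (n m : nat) : C :=
  match m with O => RtoC 0 | S m' => c n m' end.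

Lemma common_radius (x y : C) : Cmod x < 1 -> Cmod y < 1 ->
  exists r, 0 < r < 1 /\ Cmod x <= r /\ Cmod y <= r.
Proof.
  intros Hx Hy. exists ((1 + Rmax (Cmod x) (Cmod y)) / 2).
  pose proof (Rmax_l (Cmod x) (Cmod y)). pose proof (Rmax_r (Cmod x) (Cmod y)).
  pose proof (Cmod_ge_0 x). assert (Rmax (Cmod x) (Cmod y) < 1) by (apply Rmax_lub_lt; auto).
  repeat split; lra.
Qed.

Lemma poly_bounded_mono c K p p' : (p <= p')%nat -> poly_bounded c K p -> poly_bounded c K p'.
Proof.
  intros Hp [HK H]. split; auto. intros n m. eapply Rle_trans. apply H.
  pose proof (INR_S_pow_pos n p). pose proof (INR_S_pow_pos m p).
  assert (INR (S n) ^ p <= INR (S n) ^ p') by (apply Rle_pow; auto; apply INR_S_ge_1).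
  assert (INR (S m) ^ p <= INR (S m) ^ p') by (apply Rle_pow; auto; apply INR_S_ge_1).
  rewrite !Rmult_assoc. apply Rmult_le_compat_l; auto. apply Rmult_le_compat; lra.
Qed.

Lemma poly_bounded_plus c1 c2 K1 K2 p : poly_bounded c1 K1 p -> poly_bounded c2 K2 p ->
  poly_bounded (fun n m => c1 n m + c2 n m)%C (K1 + K2) p.
Proof.
  intros [H1 B1] [H2 B2]. split. lra. intros n m. eapply Rle_trans. apply Cmod_triangle.
  specialize (B1 n m). specialize (B2 n m). lra.
Qed.

Lemma poly_bounded_scal z c K p : poly_bounded c K p ->
  poly_bounded (fun n m => z * c n m)%C (Cmod z * K) p.
Proof.
  intros [H B]. split. apply Rmult_le_pos; auto. apply Cmod_ge_0.
  intros n m. rewrite Cmod_mult. rewrite !Rmult_assoc. apply Rmult_le_compat_l. apply Cmod_ge_0.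
  rewrite <- !Rmult_assoc. apply B.
Qed.

Lemma poly_bounded_mul_n c K p : poly_bounded c K p ->
  poly_bounded (fun n m => INR n * c n m)%C K (S p).
Proof.
  intros [H B]. split; auto. intros n m. rewrite Cmod_mult, Cmod_R, Rabs_pos_eq by apply pos_INR.
  specialize (B n m). pose proof (INR_S_pow_pos n p). pose proof (INR_S_pow_pos m p).
  pose proof (INR_S_pow_le_S m p). pose proof (pos_INR n). pose proof (Cmod_ge_0 (c n m)).
  assert (INR n <= INR (S n)) by (rewrite S_INR; lra).
  change (INR (S n) ^ S p) with (INR (S n) * INR (S n) ^ p).
  apply Rle_trans with (INR (S n) * (K * INR (S n) ^ p * INR (S m) ^ p)).
  apply Rmult_le_compat; auto.
  assert (0 <= K * INR (S n) ^ p) by (apply Rmult_le_pos; lra).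
  replace (K * (INR (S n) * INR (S n) ^ p) * INR (S m) ^ S p) with
    (INR (S n) * (K * INR (S n) ^ p * INR (S m) ^ S p)) by ring.
  apply Rmult_le_compat_l. lra. apply Rmult_le_compat_l; auto.
Qed.

Lemma poly_bounded_mul_m c K p : poly_bounded c K p ->
  poly_bounded (fun n m => INR m * c n m)%C K (S p).
Proof.
  intros [H B]. split; auto. intros n m. rewrite Cmod_mult, Cmod_R, Rabs_pos_eq by apply pos_INR.
  specialize (B n m). pose proof (INR_S_pow_pos n p). pose proof (INR_S_pow_pos m p).
  pose proof (INR_S_pow_le_S n p). pose proof (pos_INR m). pose proof (Cmod_ge_0 (c n m)).
  assert (INR m <= INR (S m)) by (rewrite S_INR; lra).
  change (INR (S m) ^ S p) with (INR (S m) * INR (S m) ^ p).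
  apply Rle_trans with (INR (S m) * (K * INR (S n) ^ p * INR (S m) ^ p)).
  apply Rmult_le_compat; auto.
  assert (0 <= K * INR (S n) ^ S p) by (apply Rmult_le_pos; lra).
  replace (K * INR (S n) ^ S p * (INR (S m) * INR (S m) ^ p)) with
    (INR (S m) * (K * INR (S n) ^ S p * INR (S m) ^ p)) by ring.
  apply Rmult_le_compat_l. lra. apply Rmult_le_compat_r. lra. apply Rmult_le_compat_l; auto.
Qed.

Lemma poly_bounded_shift_u c K p : poly_bounded c K p -> poly_bounded (shift_u c) K p.
Proof.
  intros [H B]. split; auto. intros n m. destruct n as [|n]; simpl shift_u.
  - rewrite Cmod_0. pose proof (INR_S_pow_pos 0 p). pose proof (INR_S_pow_pos m p).
    apply Rmult_le_pos; [apply Rmult_le_pos|]; lra.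
  - eapply Rle_trans. apply B. pose proof (INR_S_pow_pos n p). pose proof (INR_S_pow_pos m p).
    assert (INR (S n) ^ p <= INR (S (S n)) ^ p).
    { apply pow_incr. split. pose proof (INR_S_ge_1 n); lra. rewrite (S_INR (S n)). lra. }
    apply Rmult_le_compat_r. lra. apply Rmult_le_compat_l; auto.
Qed.

Lemma poly_bounded_shift_v c K p : poly_bounded c K p -> poly_bounded (shift_v c) K p.
Proof.
  intros [H B]. split; auto. intros n m. destruct m as [|m]; simpl shift_v.
  - rewrite Cmod_0. pose proof (INR_S_pow_pos 0 p). pose proof (INR_S_pow_pos n p).
    apply Rmult_le_pos; [apply Rmult_le_pos|]; lra.
  - eapply Rle_trans. apply B. pose proof (INR_S_pow_pos n p). pose proof (INR_S_pow_pos m p).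
    assert (INR (S m) ^ p <= INR (S (S m)) ^ p).
    { apply pow_incr. split. pose proof (INR_S_ge_1 m); lra. rewrite (S_INR (S m)). lra. }
    apply Rmult_le_compat_l; auto. apply Rmult_le_pos; auto. lra.
Qed.

Lemma poly_bounded_const (c : nat -> nat -> C) K :
  0 <= K -> (forall n m, Cmod (c n m) <= K) -> poly_bounded c K 0.
Proof. intros HK H. split; [exact HK|]. intros n m. simpl. rewrite !Rmult_1_r. apply H. Qed.

Section PowerSeries2Algebra.
Variables (x y : C).
Hypothesis Hx : Cmod x < 1.
Hypothesis Hy : Cmod y < 1.

Lemma pseries2_ext c1 c2 : (forall n m, c1 n m = c2 n m) -> pseries2 c1 x y = pseries2 c2 x y.
Proof. intros H. apply CSeries2_ext. intros n m. now rewrite H. Qed.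

Lemma pseries2_plus c1 c2 K1 K2 p : poly_bounded c1 K1 p -> poly_bounded c2 K2 p ->
  pseries2 (fun n m => c1 n m + c2 n m)%C x y = (pseries2 c1 x y + pseries2 c2 x y)%C.
Proof.
  intros H1 H2. destruct (common_radius x y Hx Hy) as [r [Hr [Hxr Hyr]]].
  unfold pseries2. rewrite <- (CSeries2_plus _ r Hr _ _ _ _
    (weight_bounded_pseries2_terms c1 K1 p r x y H1 ltac:(lra) Hxr Hyr)
    (weight_bounded_pseries2_terms c2 K2 p r x y H2 ltac:(lra) Hxr Hyr)).
  apply CSeries2_ext. intros; ring.
Qed.

Lemma pseries2_minus c1 c2 K1 K2 p : poly_bounded c1 K1 p -> poly_bounded c2 K2 p ->
  pseries2 (fun n m => c1 n m - c2 n m)%C x y = (pseries2 c1 x y - pseries2 c2 x y)%C.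
Proof.
  intros H1 H2. destruct (common_radius x y Hx Hy) as [r [Hr [Hxr Hyr]]].
  unfold pseries2. rewrite <- (CSeries2_minus _ r Hr _ _ _ _
    (weight_bounded_pseries2_terms c1 K1 p r x y H1 ltac:(lra) Hxr Hyr)
    (weight_bounded_pseries2_terms c2 K2 p r x y H2 ltac:(lra) Hxr Hyr)).
  apply CSeries2_ext. intros; ring.
Qed.

Lemma pseries2_scal z c K p : poly_bounded c K p ->
  pseries2 (fun n m => z * c n m)%C x y = (z * pseries2 c x y)%C.
Proof.
  intros H1. destruct (common_radius x y Hx Hy) as [r [Hr [Hxr Hyr]]].
  unfold pseries2. rewrite <- (CSeries2_scal _ r Hr z _ _
    (weight_bounded_pseries2_terms c K p r x y H1 ltac:(lra) Hxr Hyr)).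
  apply CSeries2_ext. intros; ring.
Qed.

Lemma Cmult_pseries2_du c K p : poly_bounded c K p ->
  (x * pseries2_du c x y)%C = pseries2 (fun n m => INR n * c n m)%C x y.
Proof.
  intros H1. destruct (common_radius x y Hx Hy) as [r [Hr [Hxr Hyr]]].
  unfold pseries2_du, pseries2. rewrite <- (CSeries2_scal _ r Hr x _ _
    (weight_bounded_pseries2_du_terms c K p r x y H1 ltac:(lra) Hxr Hyr)).
  apply CSeries2_ext. intros [|n] m; simpl; ring.
Qed.

Lemma Cmult_pseries2_dv c K p : poly_bounded c K p ->
  (y * pseries2_dv c x y)%C = pseries2 (fun n m => INR m * c n m)%C x y.
Proof.
  intros H1. destruct (common_radius x y Hx Hy) as [r [Hr [Hxr Hyr]]].
  unfold pseries2_dv, pseries2. rewrite <- (CSeries2_scal _ r Hr y _ _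
    (weight_bounded_pseries2_dv_terms c K p r x y H1 ltac:(lra) Hxr Hyr)).
  apply CSeries2_ext. intros n [|m]; simpl; ring.
Qed.

Lemma Cmult_pseries2_shift_u c K p : poly_bounded c K p ->
  (x * pseries2 c x y)%C = pseries2 (shift_u c) x y.
Proof.
  intros H1. destruct (common_radius x y Hx Hy) as [r [Hr [Hxr Hyr]]].
  pose proof (weight_bounded_pseries2_terms c K p r x y H1 ltac:(lra) Hxr Hyr) as Hb.
  unfold pseries2. rewrite <- (CSeries2_scal _ r Hr x _ _ Hb).
  rewrite (CSeries2_shift_n p r Hr (fun n m => shift_u c n m * (x ^ n * y ^ m))%C (Cmod x * K)).
  - apply CSeries2_ext. intros n m. simpl. ring.
  - intros m. simpl. ring.
  - intros n m. simpl shift_u.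
    replace (c n m * (x ^ S n * y ^ m))%C with (x * (c n m * (x ^ n * y ^ m)))%C by (simpl; ring).
    apply (weight_bounded_scal _ r _ _ x Hb).
Qed.

Lemma Cmult_pseries2_shift_v c K p : poly_bounded c K p ->
  (y * pseries2 c x y)%C = pseries2 (shift_v c) x y.
Proof.
  intros H1. destruct (common_radius x y Hx Hy) as [r [Hr [Hxr Hyr]]].
  pose proof (weight_bounded_pseries2_terms c K p r x y H1 ltac:(lra) Hxr Hyr) as Hb.
  unfold pseries2. rewrite <- (CSeries2_scal _ r Hr y _ _ Hb).
  rewrite (CSeries2_shift_m p r Hr (fun n m => shift_v c n m * (x ^ n * y ^ m))%C (Cmod y * K)).
  - apply CSeries2_ext. intros n m. simpl. ring.
  - intros n. simpl. ring.
  - intros n m. simpl shift_v.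
    replace (c n m * (x ^ n * y ^ S m))%C with (y * (c n m * (x ^ n * y ^ m)))%C by (simpl; ring).
    apply (weight_bounded_scal _ r _ _ y Hb).
Qed.

Definition indicator_v1 (n m : nat) : C := match m with 1%nat => RtoC 1 | _ => RtoC 0 end.

Lemma pseries2_indicator_v1 : pseries2 indicator_v1 x y = (y / (1 - x))%C.
Proof.
  unfold pseries2, CSeries2.
  rewrite (CSeries_ext _ (fun n => y * x ^ n)%C).
  - apply is_CSeries_unique, is_CSeries_scal, is_CSeries_geom, Hx.
  - intros n. apply is_CSeries_unique, is_CSeries_decr_1; [|simpl; ring].
    replace (y * x ^ n)%C with (indicator_v1 n 1 * (x ^ n * y ^ 1) + 0)%C by (simpl; ring).
    apply is_CSeries_cons, (is_CSeries_ext (fun _ => RtoC 0)); [intros m; simpl; ring|].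
    apply is_CSeries_zero.
Qed.

End PowerSeries2Algebra.

Lemma pseries2_const_u c x x' y : (forall n m, n <> 0%nat -> c n m = RtoC 0) ->
  pseries2 c x y = pseries2 c x' y.
Proof.
  intros H. apply CSeries2_ext. intros [|n] m; [simpl; ring|].
  rewrite H by lia. ring.
Qed.

Lemma Series_sum_f_R0_swap (f : nat -> nat -> R) K : (forall k, ex_series (f k)) ->
  ex_series (fun j => sum_f_R0 (fun k => f k j) K) /\
  sum_f_R0 (fun k => Series (f k)) K = Series (fun j => sum_f_R0 (fun k => f k j) K).
Proof.
  intros Hf. induction K as [|K [IHex IHeq]]; simpl; [split; [apply Hf|reflexivity]|].
  split.
  - exact (ex_series_plus (K := R_AbsRing) (V := R_NormedModule) _ _ IHex (Hf (S K))).
  - rewrite IHeq, Series_plus; auto.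
Qed.

Lemma is_series_geometric_law q : 0 < q < 1 -> is_series (fun j => (1 - q) * q ^ j) 1.
Proof.
  intros Hq.
  assert (H : is_series (fun j => q ^ j) (/ (1 - q))) by (apply is_series_geom; rewrite Rabs_pos_eq; lra).
  assert (H' : is_series (fun j => (1 - q) * q ^ j) ((1 - q) * / (1 - q)))
    by exact (is_series_scal_l (1 - q) _ _ H).
  rewrite Rinv_r in H' by lra. exact H'.
Qed.

Section AbsorptionProbabilities.
Variables (rho q : R).
Hypothesis Hrho : 0 < rho.
Hypothesis Hq : 0 < q < 1.

Lemma absp_succ k n b : absp rho q (S k) n (S b) =
  rho / (rho + 1) * Series (fun j => (1 - q) * q ^ j * absp rho q k (n + S j) (S b))
  + / (rho + 1) * (INR n / INR (n + S b) * absp rho q k (Nat.pred n) (S b)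
                   + INR (S b) / INR (n + S b) * absp rho q k n b).
Proof. reflexivity. Qed.

Lemma batch_average_bounds (f : nat -> R) : (forall j, 0 <= f j <= 1) ->
  ex_series (fun j => (1 - q) * q ^ j * f j) /\
  0 <= Series (fun j => (1 - q) * q ^ j * f j) <= 1.
Proof.
  intros Hf.
  assert (Hg : forall j, 0 <= (1 - q) * q ^ j) by (intros; apply Rmult_le_pos; [lra|apply pow_le; lra]).
  assert (Hle : forall j, 0 <= (1 - q) * q ^ j * f j <= (1 - q) * q ^ j).
  { intros j. specialize (Hf j). specialize (Hg j). split; nra. }
  assert (Hgeo : ex_series (fun j => (1 - q) * q ^ j))
    by exact (ex_intro _ _ (is_series_geometric_law q Hq)).
  assert (Hex : ex_series (fun j => (1 - q) * q ^ j * f j)).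
  { apply (ex_series_le (K := R_AbsRing) (V := R_CompleteNormedModule) _ (fun j => (1 - q) * q ^ j));
      [|exact Hgeo].
    intros j. change (Rabs ((1 - q) * q ^ j * f j) <= (1 - q) * q ^ j).
    rewrite Rabs_pos_eq; apply Hle. }
  repeat split; [exact Hex|apply Series_nonneg; [exact Hex|apply Hle]|].
  apply Rle_trans with (Series (fun j => (1 - q) * q ^ j)); [apply Series_le; [apply Hle|exact Hgeo]|].
  rewrite (is_series_unique _ _ (is_series_geometric_law q Hq)). lra.
Qed.

Lemma jump_average_bounds n b X Y Z : 0 <= X <= 1 -> 0 <= Y <= 1 -> 0 <= Z <= 1 ->
  0 <= rho / (rho + 1) * X
       + / (rho + 1) * (INR n / INR (n + S b) * Y + INR (S b) / INR (n + S b) * Z) <= 1.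
Proof.
  intros HX HY HZ.
  assert (HN : 0 < INR (n + S b)) by (apply lt_0_INR; lia).
  assert (Hw : INR n / INR (n + S b) + INR (S b) / INR (n + S b) = 1)
    by (rewrite plus_INR in *; field; lra).
  assert (Hw1 : 0 <= INR n / INR (n + S b)) by (apply Rdiv_le_0_compat; [apply pos_INR|lra]).
  assert (Hw2 : 0 <= INR (S b) / INR (n + S b)) by (apply Rdiv_le_0_compat; [apply pos_INR|lra]).
  set (w1 := INR n / INR (n + S b)) in *. set (w2 := INR (S b) / INR (n + S b)) in *.
  assert (0 <= w1 * Y + w2 * Z <= 1) by nra.
  replace (rho / (rho + 1) * X + / (rho + 1) * (w1 * Y + w2 * Z))
    with ((rho * X + (w1 * Y + w2 * Z)) / (rho + 1)) by (field; lra).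
  split; [apply Rdiv_le_0_compat; nra|].
  apply Rmult_le_reg_r with (rho + 1); [lra|].
  unfold Rdiv. rewrite Rmult_assoc, Rinv_l by lra. nra.
Qed.

Lemma absp_bounds k : forall n b, 0 <= absp rho q k n b <= 1.
Proof.
  induction k as [|k IH]; intros n [|b]; simpl absp; try lra.
  apply jump_average_bounds; try apply IH.
  apply (batch_average_bounds (fun j => absp rho q k (n + S j) (S b))). intros; apply IH.
Qed.

Lemma ex_series_batch_absp k n b : ex_series (fun j => (1 - q) * q ^ j * absp rho q k (n + S j) b).
Proof. apply batch_average_bounds. intros j; apply absp_bounds. Qed.

Lemma sum_f_R0_absp_bounds K : forall n b, 0 <= sum_f_R0 (fun k => absp rho q k n b) K <= 1.
Proof.
  induction K as [|K IH]; intros n b; [apply absp_bounds|].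
  split; [apply cond_pos_sum; intros; apply absp_bounds|].
  rewrite decomp_sum by lia. simpl pred. destruct b as [|b].
  - rewrite (sum_eq _ (fun _ => 0)) by reflexivity.
    rewrite sum_cte. simpl. lra.
  - set (w1 := INR n / INR (n + S b)). set (w2 := INR (S b) / INR (n + S b)).
    set (batch := fun k j => (1 - q) * q ^ j * absp rho q k (n + S j) (S b)).
    rewrite (sum_eq _ (fun k => Series (batch k) * (rho / (rho + 1))
        + (absp rho q k (Nat.pred n) (S b) * (w1 / (rho + 1)) + absp rho q k n b * (w2 / (rho + 1)))))
      by (intros; rewrite absp_succ; unfold batch, w1, w2; field;
          pose proof (lt_0_INR (n + S b) ltac:(lia)); lra).
    rewrite !sum_plus, <- !scal_sum.
    destruct (Series_sum_f_R0_swap batch K) as [_ ->]; [intros; apply ex_series_batch_absp|].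
    rewrite (Series_ext _ (fun j => (1 - q) * q ^ j * sum_f_R0 (fun k => absp rho q k (n + S j) (S b)) K))
      by (intros j; unfold batch; rewrite scal_sum; apply sum_eq; intros; ring).
    pose proof (batch_average_bounds (fun j => sum_f_R0 (fun k => absp rho q k (n + S j) (S b)) K)
      (fun j => IH (n + S j)%nat (S b))) as [_ HX].
    pose proof (jump_average_bounds n b _ _ _ HX (IH (Nat.pred n) (S b)) (IH n b)).
    simpl absp. unfold w1, w2.
    match type of H with _ <= ?E <= _ => replace (0 + _) with E by (unfold Rdiv; ring) end.
    apply H.
Qed.

Lemma ex_series_absp n b : ex_series (fun k => absp rho q k n b).
Proof.
  destruct (ex_finite_lim_seq_incr (sum_n (fun k => absp rho q k n b)) 1) as [l Hl].
  - intros K. rewrite !sum_n_Reals, tech5. pose proof (absp_bounds (S K) n b). lra.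
  - intros K. rewrite sum_n_Reals. apply sum_f_R0_absp_bounds.
  - exists l. exact Hl.
Qed.

Lemma Series_absp_bounds n b : 0 <= Series (fun k => absp rho q k n b) <= 1.
Proof.
  split; [apply Series_nonneg; [apply ex_series_absp|intros; apply absp_bounds]|].
  assert (H : forall K, sum_n (fun k => absp rho q k n b) K <= 1)
    by (intros K; rewrite sum_n_Reals; apply sum_f_R0_absp_bounds).
  assert (Hl : is_lim_seq (sum_n (fun k => absp rho q k n b)) (Series (fun k => absp rho q k n b)))
    by exact (Series_correct _ (ex_series_absp n b)).
  exact (is_lim_seq_le _ _ _ _ H Hl (is_lim_seq_const 1)).
Qed.

End AbsorptionProbabilities.

Section SojournTransform.
Variables (rho q : R) (s : C).
Hypothesis Hrho : 0 < rho.
Hypothesis Hq : 0 < q < 1.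
Hypothesis Hs : 0 <= Re s.

(* Laplace transform of one Exp(rho + 1) holding time *)
Definition jump_factor : C := (RtoC (rho + 1) / (s + RtoC (rho + 1)))%C.

Lemma jump_denominator_neq_0 : (s + RtoC (rho + 1))%C <> RtoC 0.
Proof. intros E. apply (f_equal Re) in E. rewrite re_plus, !re_RtoC in E. lra. Qed.

Lemma Cmod_jump_factor_le_1 : Cmod jump_factor <= 1.
Proof.
  unfold jump_factor. rewrite Cmod_div by apply jump_denominator_neq_0.
  rewrite Cmod_R, Rabs_pos_eq by lra.
  pose proof (re_le_Cmod (s + RtoC (rho + 1))%C) as H.
  rewrite re_plus, re_RtoC, Rabs_pos_eq in H by lra.
  apply Rmult_le_reg_r with (Cmod (s + RtoC (rho + 1))%C); [lra|].
  unfold Rdiv. rewrite Rmult_assoc, Rinv_l by lra. lra.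
Qed.

Lemma Cmod_absp_jump_factor_le k n b :
  Cmod (RtoC (absp rho q k n b) * jump_factor ^ k)%C <= absp rho q k n b.
Proof.
  pose proof (absp_bounds rho q Hrho Hq k n b).
  rewrite Cmod_mult, Cmod_R, Rabs_pos_eq, Cmod_pow by lra.
  assert (Cmod jump_factor ^ k <= 1).
  { rewrite <- (pow1 k). apply pow_incr. split; [apply Cmod_ge_0|apply Cmod_jump_factor_le_1]. }
  pose proof (pow_le (Cmod jump_factor) k (Cmod_ge_0 _)). nra.
Qed.

Lemma is_CSeries_estar n b :
  is_CSeries (fun k => RtoC (absp rho q k n b) * jump_factor ^ k)%C (estar rho q s n b).
Proof.
  assert (E : estar rho q s n b = CSeries (fun k => RtoC (absp rho q k n b) * jump_factor ^ k)%C).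
  { apply CSeries_ext. intros k. f_equal. }
  rewrite E. apply (CSeries_correct_le _ (fun k => absp rho q k n b)).
  - intros k. apply Cmod_absp_jump_factor_le.
  - apply ex_series_absp; assumption.
Qed.

Lemma Cmod_estar_le_1 n b : Cmod (estar rho q s n b) <= 1.
Proof.
  apply Rle_trans with (Series (fun k => absp rho q k n b)).
  - apply (is_CSeries_Cmod_le _ _ (fun k => absp rho q k n b) _ (is_CSeries_estar n b));
      [apply Series_correct, ex_series_absp; assumption|intros k; apply Cmod_absp_jump_factor_le].
  - apply Series_absp_bounds; assumption.
Qed.

Lemma estar_b0 n : estar rho q s n 0 = RtoC 1.
Proof.
  rewrite <- (is_CSeries_unique _ _ (is_CSeries_estar n 0)).
  apply is_CSeries_unique.
  replace (RtoC 1) with (RtoC (absp rho q 0 n 0) * jump_factor ^ 0 + 0)%C by (simpl; ring).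
  apply is_CSeries_cons, (is_CSeries_ext (fun _ => RtoC 0)); [intros k; simpl; ring|].
  apply is_CSeries_zero.
Qed.

Definition estar_batch (n b : nat) : C :=
  CSeries (fun j => RtoC q ^ j * estar rho q s (n + S j) b)%C.

Lemma is_CSeries_estar_batch n b :
  is_CSeries (fun j => RtoC q ^ j * estar rho q s (n + S j) b)%C (estar_batch n b).
Proof.
  apply (CSeries_correct_le _ (fun j => q ^ j)).
  - intros j. rewrite Cmod_mult, Cmod_pow, Cmod_R, Rabs_pos_eq by lra.
    pose proof (Cmod_estar_le_1 (n + S j) b). pose proof (pow_le q j ltac:(lra)).
    pose proof (Cmod_ge_0 (estar rho q s (n + S j) b)). nra.
  - exists (/ (1 - q)). apply is_series_geom. rewrite Rabs_pos_eq; lra.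
Qed.

Lemma Cmod_estar_batch_le n b : Cmod (estar_batch n b) <= / (1 - q).
Proof.
  apply (is_CSeries_Cmod_le _ _ (fun j => q ^ j) _ (is_CSeries_estar_batch n b)).
  - apply is_series_geom. rewrite Rabs_pos_eq; lra.
  - intros j. rewrite Cmod_mult, Cmod_pow, Cmod_R, Rabs_pos_eq by lra.
    pose proof (Cmod_estar_le_1 (n + S j) b). pose proof (pow_le q j ltac:(lra)).
    pose proof (Cmod_ge_0 (estar rho q s (n + S j) b)). nra.
Qed.

Lemma estar_batch_succ n b : estar_batch n b = (estar rho q s (S n) b + q * estar_batch (S n) b)%C.
Proof.
  apply is_CSeries_unique.
  replace (estar rho q s (S n) b) with (RtoC q ^ 0 * estar rho q s (n + 1) b)%C
    by (rewrite Nat.add_1_r; simpl; ring).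
  apply is_CSeries_cons.
  apply (is_CSeries_ext (fun j => q * (RtoC q ^ j * estar rho q s (S n + S j) b))%C);
    [intros j; replace (n + S (S j))%nat with (S n + S j)%nat by lia; simpl; ring|].
  apply is_CSeries_scal, is_CSeries_estar_batch.
Qed.

Lemma is_CSeries_batch_interchange n b :
  is_CSeries (fun k => RtoC (Series (fun j => (1 - q) * q ^ j * absp rho q k (n + S j) b)%R)
                       * jump_factor ^ k)%C
             (RtoC (1 - q) * estar_batch n b)%C.
Proof.
  set (g := fun j : nat => (1 - q) * q ^ j).
  assert (Hg : forall j, 0 <= g j) by (intros; apply Rmult_le_pos; [lra|apply pow_le; lra]).
  apply (is_CSeries_swap (fun k j => RtoC (g j * absp rho q k (n + S j) b)%R * jump_factor ^ k)%C
           (fun k j => g j * absp rho q k (n + S j) b)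
           (fun j => g j * Series (fun k => absp rho q k (n + S j) b))
           _ (fun j => RtoC (g j) * estar rho q s (n + S j) b)%C).
  - intros k j. rewrite RtoC_mult, <- Cmult_assoc, Cmod_mult, Cmod_R, Rabs_pos_eq by apply Hg.
    apply Rmult_le_compat_l; [apply Hg|apply Cmod_absp_jump_factor_le].
  - intros j. exact (is_series_scal_l (g j) _ _ (Series_correct _ (ex_series_absp rho q Hrho Hq _ _))).
  - apply (ex_series_le (K := R_AbsRing) (V := R_CompleteNormedModule) _ g);
      [|exact (ex_intro _ _ (is_series_geometric_law q Hq))].
    intros j. change (Rabs (g j * Series (fun k => absp rho q k (n + S j) b)) <= g j).
    pose proof (Series_absp_bounds rho q Hrho Hq (n + S j) b). pose proof (Hg j).
    rewrite Rabs_pos_eq by nra. nra.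
  - intros k.
    apply (is_CSeries_ext (fun j => jump_factor ^ k * RtoC (g j * absp rho q k (n + S j) b)%R)%C);
      [intros j; ring|].
    rewrite Cmult_comm. apply is_CSeries_scal, is_CSeries_RtoC, Series_correct.
    apply ex_series_batch_absp; assumption.
  - intros j.
    apply (is_CSeries_ext (fun k => RtoC (g j) * (RtoC (absp rho q k (n + S j) b) * jump_factor ^ k))%C);
      [intros k; rewrite RtoC_mult; ring|].
    apply is_CSeries_scal, is_CSeries_estar.
  - apply (is_CSeries_ext (fun j => RtoC (1 - q) * (RtoC q ^ j * estar rho q s (n + S j) b))%C);
      [intros j; unfold g; rewrite RtoC_mult, RtoC_pow; ring|].
    apply is_CSeries_scal, is_CSeries_estar_batch.
Qed.

Lemma estar_first_step n b :
  ((s + RtoC (rho + 1)) * estar rho q s n (S b))%C =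
  (RtoC (rho * (1 - q)) * estar_batch n (S b)
   + RtoC (INR n / INR (n + S b)) * estar rho q s (Nat.pred n) (S b)
   + RtoC (INR (S b) / INR (n + S b)) * estar rho q s n b)%C.
Proof.
  set (w1 := INR n / INR (n + S b)). set (w2 := INR (S b) / INR (n + S b)).
  set (batch := fun k => Series (fun j => (1 - q) * q ^ j * absp rho q k (n + S j) (S b))).
  set (term := fun k => (jump_factor *
         (RtoC (rho / (rho + 1)) * (RtoC (batch k) * jump_factor ^ k)
          + RtoC (/ (rho + 1)) * (RtoC w1 * (RtoC (absp rho q k (Nat.pred n) (S b)) * jump_factor ^ k)
                                  + RtoC w2 * (RtoC (absp rho q k n b) * jump_factor ^ k))))%C).
  assert (Hterm : is_CSeries term (estar rho q s n (S b))).
  { apply (is_CSeries_ext (fun k => RtoC (absp rho q (S k) n (S b)) * jump_factor ^ S k)%C).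
    - intros k. unfold term, batch. rewrite absp_succ. fold w1 w2.
      simpl Cpow. repeat rewrite ?RtoC_plus, ?RtoC_mult. ring.
    - apply (is_CSeries_incr_1 (fun k => RtoC (absp rho q k n (S b)) * jump_factor ^ k)%C);
        [apply is_CSeries_estar|simpl; ring]. }
  assert (Hsum : is_CSeries term (jump_factor *
            (RtoC (rho / (rho + 1)) * (RtoC (1 - q) * estar_batch n (S b))
             + RtoC (/ (rho + 1)) * (RtoC w1 * estar rho q s (Nat.pred n) (S b)
                                      + RtoC w2 * estar rho q s n b)))%C).
  { apply is_CSeries_scal, is_CSeries_plus;
      [apply is_CSeries_scal, is_CSeries_batch_interchange|].
    apply is_CSeries_scal, is_CSeries_plus; apply is_CSeries_scal, is_CSeries_estar. }
  rewrite <- (is_CSeries_unique _ _ Hterm), (is_CSeries_unique _ _ Hsum).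
  pose proof jump_denominator_neq_0.
  unfold jump_factor. rewrite RtoC_mult, RtoC_div, RtoC_inv, RtoC_minus by lra.
  field. split; [|assumption].
  intros E. apply (f_equal Re) in E. simpl in E. lra.
Qed.

End SojournTransform.

Section GeneratingFunctions.
Variables (rho q : R) (s : C).
Hypothesis Hrho : 0 < rho.
Hypothesis Hq : 0 < q < 1.
Hypothesis Hs : 0 <= Re s.

(* Coefficients of E and F in (n, b); b = 0 is excluded although [estar n 0 = 1]. *)
Definition ecoef (n m : nat) : C :=
  match m with O => RtoC 0 | S _ => estar rho q s n m end.
Definition fcoef (n m : nat) : C :=
  match m with O => RtoC 0 | S _ => estar_batch rho q s n m end.
Definition boundary_coef (n m : nat) : C :=
  match n, m with
  | O, S _ => (estar rho q s 0 m + q * estar_batch rho q s 0 m)%C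
  | _, _ => RtoC 0
  end.

Lemma poly_bounded_ecoef : poly_bounded ecoef 1 0.
Proof.
  apply poly_bounded_const; [lra|]. intros n [|m]; simpl.
  - rewrite Cmod_0. lra.
  - now apply Cmod_estar_le_1.
Qed.

Lemma poly_bounded_fcoef : poly_bounded fcoef (/ (1 - q)) 0.
Proof.
  assert (0 < / (1 - q)) by (apply Rinv_0_lt_compat; lra).
  apply poly_bounded_const; [lra|]. intros n [|m]; simpl.
  - rewrite Cmod_0. lra.
  - now apply Cmod_estar_batch_le.
Qed.

Lemma poly_bounded_boundary_coef : poly_bounded boundary_coef (1 + q / (1 - q)) 0.
Proof.
  assert (0 <= q / (1 - q)) by (apply Rdiv_le_0_compat; lra).
  apply poly_bounded_const; [lra|]. intros [|n] [|m]; simpl; try (rewrite Cmod_0; lra).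
  eapply Rle_trans; [apply Cmod_triangle|].
  rewrite Cmod_mult, Cmod_R, Rabs_pos_eq by lra.
  pose proof (Cmod_estar_le_1 rho q s Hrho Hq Hs 0 (S m)).
  pose proof (Cmod_estar_batch_le rho q s Hrho Hq Hs 0 (S m)).
  assert (q * Cmod (estar_batch rho q s 0 (S m)) <= q / (1 - q)) by (apply Rmult_le_compat_l; lra).
  lra.
Qed.

Lemma Egen_pseries2 x y : Cmod x < 1 -> Cmod y < 1 -> Egen rho q s x y = pseries2 ecoef x y.
Proof.
  intros Hx Hy. destruct (common_radius x y Hx Hy) as [r [Hr [Hxr Hyr]]].
  pose proof (weight_bounded_pseries2_terms ecoef 1 0 r x y poly_bounded_ecoef ltac:(lra) Hxr Hyr) as Hb.
  apply CSeries_ext. intros n. apply is_CSeries_unique.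
  apply (is_CSeries_ext (fun m => ecoef n (S m) * (x ^ n * y ^ S m))%C).
  - intros m. simpl. reflexivity.
  - apply (is_CSeries_incr_1 (fun m => ecoef n m * (x ^ n * y ^ m))%C);
      [exact (is_CSeries_row _ _ Hr _ _ Hb n)|simpl; ring].
Qed.

Lemma fcoef_shift_u n m :
  (shift_u fcoef n m - q * fcoef n m)%C = (ecoef n m - boundary_coef n m)%C.
Proof.
  destruct n as [|n], m as [|m]; simpl; try ring.
  rewrite (estar_batch_succ rho q s Hrho Hq Hs n (S m)). ring.
Qed.

Lemma Cmod_q_lt_1 : Cmod (RtoC q) < 1.
Proof. rewrite Cmod_R, Rabs_pos_eq; lra. Qed.

(* Coefficientwise, (u - q) F = E - D with D independent of u; u = q gives D = E(q, .). *)
Lemma Cmult_sub_q_Fpseries x y : Cmod x < 1 -> Cmod y < 1 ->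
  ((x - q) * pseries2 fcoef x y)%C = (pseries2 ecoef x y - pseries2 ecoef q y)%C.
Proof.
  intros Hx Hy.
  assert (G : forall x, Cmod x < 1 ->
            ((x - q) * pseries2 fcoef x y)%C = (pseries2 ecoef x y - pseries2 boundary_coef x y)%C).
  { intros x' Hx'.
    replace ((x' - q) * pseries2 fcoef x' y)%C
      with (x' * pseries2 fcoef x' y - q * pseries2 fcoef x' y)%C by ring.
    rewrite (Cmult_pseries2_shift_u x' y Hx' Hy fcoef _ _ poly_bounded_fcoef).
    rewrite <- (pseries2_scal x' y Hx' Hy (RtoC q) fcoef _ _ poly_bounded_fcoef).
    rewrite <- (pseries2_minus x' y Hx' Hy _ _ _ _ _ (poly_bounded_shift_u _ _ _ poly_bounded_fcoef)
                  (poly_bounded_scal (RtoC q) _ _ _ poly_bounded_fcoef)).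
    rewrite <- (pseries2_minus x' y Hx' Hy _ _ _ _ _ poly_bounded_ecoef poly_bounded_boundary_coef).
    apply pseries2_ext. intros; apply fcoef_shift_u. }
  pose proof (G (RtoC q) Cmod_q_lt_1) as Gq.
  replace ((q - q) * pseries2 fcoef q y)%C with (RtoC 0) in Gq by ring.
  rewrite (G x Hx), (pseries2_const_u boundary_coef x q y); [|intros [|n] m Hn; [lia|reflexivity]].
  transitivity (pseries2 ecoef x y - pseries2 ecoef q y
                + (pseries2 ecoef q y - pseries2 boundary_coef q y))%C; [ring|rewrite <- Gq; ring].
Qed.

Lemma Ffun_pseries2 x y : Cmod x < 1 -> Cmod y < 1 -> Ffun rho q s x y = pseries2 fcoef x y.
Proof.
  intros Hx Hy. unfold Ffun.
  destruct (Req_EM_T (Re x) q) as [E1|E1], (Req_EM_T (Im x) 0) as [E2|E2].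
  - assert (Ex : x = RtoC q) by (destruct x as [a b]; simpl in E1, E2; now subst).
    subst x. apply is_Cderive_unique.
    apply (is_Cderive_ext_disk (fun x => (x - q) * pseries2 fcoef x y + pseries2 ecoef q y)%C);
      [exact Cmod_q_lt_1| |].
    { intros x Hx1. rewrite Cmult_sub_q_Fpseries, Egen_pseries2 by assumption. ring. }
    eapply is_Cderive_plus; [|apply is_Cderive_const|].
    + eapply is_Cderive_mult.
      * eapply is_Cderive_minus; [apply is_Cderive_id|apply is_Cderive_const|reflexivity].
      * apply (is_Cderive_pseries2_affine fcoef (/ (1 - q)) 0 _ (RtoC 1) (RtoC 0) (RtoC 0) y q q y);
          [exact poly_bounded_fcoef|exact Cmod_q_lt_1|exact Hy|ring|ring|intros x; f_equal; ring].
      * reflexivity.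
    + ring.
  all: assert (Hne : (x - q)%C <> RtoC 0)
         by (intros E; destruct x as [a b]; injection E as E; simpl in *; lra).
  all: rewrite !Egen_pseries2 by (assumption || exact Cmod_q_lt_1).
  all: rewrite <- Cmult_sub_q_Fpseries by assumption; field; exact Hne.
Qed.

Lemma estar_first_step_scaled n b :
  ((s + RtoC (rho + 1)) * ((INR n + INR (S b)) * estar rho q s n (S b)))%C =
  (RtoC (rho * (1 - q)) * ((INR n + INR (S b)) * estar_batch rho q s n (S b))
   + INR n * estar rho q s (Nat.pred n) (S b) + INR (S b) * estar rho q s n b)%C.
Proof.
  assert (HN : 0 < INR n + INR (S b)) by (rewrite <- plus_INR; apply lt_0_INR; lia).
  assert (HNc : RtoC (INR n + INR (S b)) <> RtoC 0) by (intros E; apply RtoC_inj in E; lra).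
  transitivity ((INR n + INR (S b)) * ((s + RtoC (rho + 1)) * estar rho q s n (S b)))%C;
    [rewrite RtoC_plus; ring|].
  rewrite (estar_first_step rho q s Hrho Hq Hs n b), plus_INR, !RtoC_div, !RtoC_plus by lra.
  field. now rewrite <- RtoC_plus.
Qed.

(* Multiplying the first-step equation by n + b + 1 turns it into an identity between
   coefficients of u dE/du + v dE/dv and of series in u, v. *)
Lemma ecoef_first_order_identity n m :
  ((s + RtoC (rho + 1)) * (INR n * ecoef n m + INR m * ecoef n m))%C =
  (RtoC (rho * (1 - q)) * (INR n * fcoef n m + INR m * fcoef n m)
   + shift_u (fun n m => INR n * ecoef n m + ecoef n m)%C n m
   + shift_v (fun n m => INR m * ecoef n m + ecoef n m)%C n m + indicator_v1 n m)%C.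
Proof.
  destruct m as [|b]; [destruct n; simpl; ring|].
  transitivity ((s + RtoC (rho + 1)) * ((INR n + INR (S b)) * estar rho q s n (S b)))%C;
    [simpl; rewrite RtoC_plus; ring|].
  rewrite estar_first_step_scaled.
  destruct n as [|n], b as [|b]; cbn [shift_u shift_v indicator_v1 ecoef fcoef Nat.pred];
    rewrite ?estar_b0 by assumption; rewrite ?S_INR, ?RtoC_plus; try change (INR 0) with 0;
    rewrite ?RtoC_0; ring.
Qed.

Lemma Epseries_first_order_pde x y : Cmod x < 1 -> Cmod y < 1 ->
  ((s + RtoC (rho + 1)) * (x * pseries2_du ecoef x y + y * pseries2_dv ecoef x y))%C =
  (RtoC (rho * (1 - q)) * (x * pseries2_du fcoef x y + y * pseries2_dv fcoef x y)
   + x * (x * pseries2_du ecoef x y + pseries2 ecoef x y)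
   + y * (y * pseries2_dv ecoef x y + pseries2 ecoef x y) + y / (1 - x))%C.
Proof.
  intros Hx Hy.
  pose proof poly_bounded_ecoef as Ce. pose proof poly_bounded_fcoef as Cf.
  pose proof (poly_bounded_mono _ _ _ 1 (le_0_n 1) Ce) as Ce1.
  pose proof (poly_bounded_mul_n _ _ _ Ce) as Cne. pose proof (poly_bounded_mul_m _ _ _ Ce) as Cme.
  pose proof (poly_bounded_mul_n _ _ _ Cf) as Cnf. pose proof (poly_bounded_mul_m _ _ _ Cf) as Cmf.
  pose proof (poly_bounded_plus _ _ _ _ _ Cne Cme) as C1.
  pose proof (poly_bounded_plus _ _ _ _ _ Cnf Cmf) as C2.
  pose proof (poly_bounded_plus _ _ _ _ _ Cne Ce1) as C3.
  pose proof (poly_bounded_plus _ _ _ _ _ Cme Ce1) as C4.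
  pose proof (poly_bounded_scal (RtoC (rho * (1 - q))) _ _ _ C2) as C5.
  pose proof (poly_bounded_plus _ _ _ _ _ C5 (poly_bounded_shift_u _ _ _ C3)) as C6.
  pose proof (poly_bounded_plus _ _ _ _ _ C6 (poly_bounded_shift_v _ _ _ C4)) as C7.
  assert (C8 : poly_bounded indicator_v1 1 1).
  { split; [lra|]. intros n m. pose proof (INR_S_ge_1 n). pose proof (INR_S_ge_1 m).
    destruct m as [|[|m]]; simpl indicator_v1; rewrite ?Cmod_0, ?Cmod_1; nra. }
  rewrite (Cmult_pseries2_du x y Hx Hy _ _ _ Ce), (Cmult_pseries2_dv x y Hx Hy _ _ _ Ce).
  rewrite (Cmult_pseries2_du x y Hx Hy _ _ _ Cf), (Cmult_pseries2_dv x y Hx Hy _ _ _ Cf).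
  rewrite <- (pseries2_plus x y Hx Hy _ _ _ _ _ Cne Cme), <- (pseries2_plus x y Hx Hy _ _ _ _ _ Cnf Cmf).
  rewrite <- (pseries2_plus x y Hx Hy _ _ _ _ _ Cne Ce1), <- (pseries2_plus x y Hx Hy _ _ _ _ _ Cme Ce1).
  rewrite <- (pseries2_scal x y Hx Hy _ _ _ _ C1), <- (pseries2_scal x y Hx Hy _ _ _ _ C2).
  rewrite (Cmult_pseries2_shift_u x y Hx Hy _ _ _ C3), (Cmult_pseries2_shift_v x y Hx Hy _ _ _ C4).
  rewrite <- (pseries2_indicator_v1 x y Hx).
  rewrite <- (pseries2_plus x y Hx Hy _ _ _ _ _ C5 (poly_bounded_shift_u _ _ _ C3)).
  rewrite <- (pseries2_plus x y Hx Hy _ _ _ _ _ C6 (poly_bounded_shift_v _ _ _ C4)).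
  rewrite <- (pseries2_plus x y Hx Hy _ _ _ _ _ C7 C8).
  apply pseries2_ext. intros n m. apply ecoef_first_order_identity.
Qed.

End GeneratingFunctions.

Lemma Cmod_mult_lt_1 u v : Cmod u < 1 -> Cmod v < 1 -> Cmod (u * v)%C < 1.
Proof. intros Hu Hv. rewrite Cmod_mult. pose proof (Cmod_ge_0 u). pose proof (Cmod_ge_0 v). nra. Qed.

Lemma is_Cderive_Ppol rho q s u :
  is_Cderive (Ppol rho q s) u (2 * u - (s + RtoC (1 + rho + q)))%C.
Proof.
  unfold Ppol. eapply is_Cderive_plus; [|apply is_Cderive_const|].
  - eapply is_Cderive_minus.
    + eapply is_Cderive_mult; [apply is_Cderive_id|apply is_Cderive_id|reflexivity].
    + eapply is_Cderive_mult; [apply is_Cderive_const|apply is_Cderive_id|reflexivity].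
    + reflexivity.
  - ring.
Qed.

Section PhiEquation.
Variables (rho q : R) (s : C).
Hypothesis Hrho : 0 < rho.
Hypothesis Hq : 0 < q < 1.
Hypothesis Hs : 0 <= Re s.
Variables (u v : C).
Hypothesis Hu : Cmod u < 1.
Hypothesis Hv : Cmod v < 1.

Let w := (u * v)%C.
Let Hw : Cmod w < 1 := Cmod_mult_lt_1 u v Hu Hv.
Let F := pseries2 (fcoef rho q s) u w.
Let Fu := pseries2_du (fcoef rho q s) u w.
Let Fw := pseries2_dv (fcoef rho q s) u w.

Lemma is_Cderive_Phi_u : is_Cderive (fun x => Phi rho q s x v) u
  ((2 * u - (s + RtoC (1 + rho + q))) * (1 - v) * F + Ppol rho q s u * (1 - v) * (Fu + v * Fw))%C.
Proof.
  apply (is_Cderive_ext_disk (fun x => Ppol rho q s x * (1 - v) * pseries2 (fcoef rho q s) x (x * v))%C);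
    [exact Hu| |].
  { intros x Hx. unfold Phi. rewrite Ffun_pseries2 by auto using Cmod_mult_lt_1. reflexivity. }
  eapply is_Cderive_mult.
  - eapply is_Cderive_mult; [apply is_Cderive_Ppol|apply is_Cderive_const|reflexivity].
  - apply (is_Cderive_pseries2_affine _ _ _ _ (RtoC 1) (RtoC 0) v (RtoC 0) u u w
             (poly_bounded_fcoef rho q s Hrho Hq Hs) Hu Hw);
    [ring|unfold w; ring|intros x; f_equal; ring].
  - unfold F, Fu, Fw, w. ring.
Qed.

Lemma is_Cderive_Phi_v : is_Cderive (fun y => Phi rho q s u y) v
  (- Ppol rho q s u * F + Ppol rho q s u * (1 - v) * (u * Fw))%C.
Proof.
  apply (is_Cderive_ext_disk (fun y => Ppol rho q s u * (1 - y) * pseries2 (fcoef rho q s) u (u * y))%C);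
    [exact Hv| |].
  { intros y Hy. unfold Phi. rewrite Ffun_pseries2 by auto using Cmod_mult_lt_1. reflexivity. }
  eapply is_Cderive_mult.
  - eapply is_Cderive_mult; [apply is_Cderive_const| |reflexivity].
    eapply is_Cderive_minus; [apply is_Cderive_const|apply is_Cderive_id|reflexivity].
  - apply (is_Cderive_pseries2_affine _ _ _ _ (RtoC 0) u u (RtoC 0) v u w
             (poly_bounded_fcoef rho q s Hrho Hq Hs) Hu Hw);
    [ring|unfold w; ring|intros y; f_equal; ring].
  - unfold F, Fu, Fw, w. ring.
Qed.

Let E0 := pseries2 (ecoef rho q s) q w.
Let E0' := pseries2_dv (ecoef rho q s) q w.

Lemma pseries2_du_ecoef : pseries2_du (ecoef rho q s) u w = (F + (u - q) * Fu)%C.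
Proof.
  pose proof (poly_bounded_ecoef rho q s Hrho Hq Hs) as Ce.
  pose proof (poly_bounded_fcoef rho q s Hrho Hq Hs) as Cf.
  assert (D1 : is_Cderive (fun x => pseries2 (ecoef rho q s) x w) u
                 (1 * pseries2_du (ecoef rho q s) u w + 0 * pseries2_dv (ecoef rho q s) u w)%C).
  { apply (is_Cderive_pseries2_affine _ _ _ _ (RtoC 1) (RtoC 0) (RtoC 0) w u u w Ce Hu Hw);
      [ring|ring|intros; f_equal; ring]. }
  assert (D2 : is_Cderive (fun x => pseries2 (ecoef rho q s) x w) u (F + (u - q) * Fu)%C).
  { apply (is_Cderive_ext_disk (fun x => (x - q) * pseries2 (fcoef rho q s) x w + E0)%C); [exact Hu| |].
    { intros x Hx. rewrite Cmult_sub_q_Fpseries by assumption. unfold E0. ring. }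
    eapply is_Cderive_plus; [|apply is_Cderive_const|].
    - eapply is_Cderive_mult.
      + eapply is_Cderive_minus; [apply is_Cderive_id|apply is_Cderive_const|reflexivity].
      + apply (is_Cderive_pseries2_affine _ _ _ _ (RtoC 1) (RtoC 0) (RtoC 0) w u u w Cf Hu Hw);
          [ring|ring|intros; f_equal; ring].
      + reflexivity.
    - unfold F, Fu, Fw. ring. }
  rewrite <- (is_C_derive_unique _ _ _ D2), (is_C_derive_unique _ _ _ D1). ring.
Qed.

Lemma pseries2_dv_ecoef : pseries2_dv (ecoef rho q s) u w = ((u - q) * Fw + E0')%C.
Proof.
  pose proof (poly_bounded_ecoef rho q s Hrho Hq Hs) as Ce.
  pose proof (poly_bounded_fcoef rho q s Hrho Hq Hs) as Cf.
  assert (D1 : is_Cderive (fun y => pseries2 (ecoef rho q s) u y) w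
                 (0 * pseries2_du (ecoef rho q s) u w + 1 * pseries2_dv (ecoef rho q s) u w)%C).
  { apply (is_Cderive_pseries2_affine _ _ _ _ (RtoC 0) u (RtoC 1) (RtoC 0) w u w Ce Hu Hw);
      [ring|ring|intros; f_equal; ring]. }
  assert (D2 : is_Cderive (fun y => pseries2 (ecoef rho q s) u y) w ((u - q) * Fw + E0')%C).
  { apply (is_Cderive_ext_disk (fun y => (u - q) * pseries2 (fcoef rho q s) u y
                                         + pseries2 (ecoef rho q s) q y)%C); [exact Hw| |].
    { intros y Hy. rewrite Cmult_sub_q_Fpseries by assumption. ring. }
    eapply is_Cderive_plus.
    - eapply is_Cderive_mult; [apply is_Cderive_const| |reflexivity].
      apply (is_Cderive_pseries2_affine _ _ _ _ (RtoC 0) u (RtoC 1) (RtoC 0) w u w Cf Hu Hw);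
        [ring|ring|intros; f_equal; ring].
    - apply (is_Cderive_pseries2_affine _ _ _ _ (RtoC 0) (RtoC q) (RtoC 1) (RtoC 0) w q w Ce
               (Cmod_q_lt_1 q Hq) Hw); [ring|ring|intros; f_equal; ring].
    - unfold Fw, E0'. ring. }
  rewrite <- (is_C_derive_unique _ _ _ D2), (is_C_derive_unique _ _ _ D1). ring.
Qed.

Lemma dEv_pseries2 : dEv rho q s q w = E0'.
Proof.
  apply is_Cderive_unique.
  apply (is_Cderive_ext_disk (fun y => pseries2 (ecoef rho q s) q y)); [exact Hw| |].
  { intros y Hy. symmetry. apply Egen_pseries2; auto using Cmod_q_lt_1. }
  replace E0' with (0 * pseries2_du (ecoef rho q s) q w + 1 * E0')%C by ring.
  apply (is_Cderive_pseries2_affine _ _ _ _ (RtoC 0) (RtoC q) (RtoC 1) (RtoC 0) w q w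
           (poly_bounded_ecoef rho q s Hrho Hq Hs) (Cmod_q_lt_1 q Hq) Hw);
    [ring|ring|intros; f_equal; ring].
Qed.

Lemma calL_expand : u <> RtoC 0 ->
  calL rho q s u v =
  ((1 - v) * (v / (1 - u) + (1 + v) * Egen rho q s q w
              - v * (s + RtoC (1 + rho) - w) * dEv rho q s q w))%C.
Proof.
  intros Hu0.
  unfold calL, Lfun, w. field. auto using one_minus_neq_0.
Qed.

(* After substituting E = (u - q) F + E(q, .) and its derivatives, the equation for
   Phi is -(1 - v)/u times the first-order equation satisfied by E at (u, uv). *)
Lemma Phi_first_order_pde : u <> RtoC 0 -> Ppol rho q s u <> RtoC 0 ->
  Cplus (Cminus (CDeriv (fun x => Phi rho q s x v) u)
                (Cmult (Cmult (Cdiv (Cminus u (RtoC q)) (Ppol rho q s u))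
                              (Cmult v (Cminus (RtoC 1) v)))
                       (CDeriv (fun y => Phi rho q s u y) v)))
        (calL rho q s u v) = RtoC 0.
Proof.
  intros Hu0 HP.
  rewrite (is_Cderive_unique (fun x => Phi rho q s x v) _ _ is_Cderive_Phi_u).
  rewrite (is_Cderive_unique (fun y => Phi rho q s u y) _ _ is_Cderive_Phi_v).
  rewrite calL_expand, Egen_pseries2, dEv_pseries2 by auto using Cmod_q_lt_1.
  pose proof (Epseries_first_order_pde rho q s Hrho Hq Hs u w Hu Hw) as PDE.
  rewrite pseries2_du_ecoef, pseries2_dv_ecoef in PDE.
  replace (pseries2 (ecoef rho q s) u w) with ((u - q) * F + E0)%C in PDE
    by (unfold F, E0; rewrite Cmult_sub_q_Fpseries by auto; ring).
  unfold F, Fu, Fw, E0, E0', w, Ppol in *.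
  pose proof (one_minus_neq_0 u Hu).
  rewrite ?RtoC_plus, ?RtoC_mult, ?RtoC_minus in *.
  match type of PDE with ?L = ?R =>
    transitivity (- (1 - v) / u * (L - R))%C; [|rewrite PDE; ring] end.
  field. auto.
Qed.

End PhiEquation.

Theorem mainTheorem5 (rho q : R) (s : C) :
  0 < rho -> 0 < q -> q < 1 -> rho + q < 1 -> 0 <= Re s ->
  forall u v : C, inD u -> inD v -> u <> RtoC 0 ->
  Ppol rho q s u <> RtoC 0 ->
  Cex_derive (fun x => Phi rho q s x v) u /\
  Cex_derive (fun y => Phi rho q s u y) v /\
  Cplus (Cminus (CDeriv (fun x => Phi rho q s x v) u)
                (Cmult (Cmult (Cdiv (Cminus u (RtoC q)) (Ppol rho q s u))
                              (Cmult v (Cminus (RtoC 1) v)))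
                       (CDeriv (fun y => Phi rho q s u y) v)))
        (calL rho q s u v) = RtoC 0 /\
  calL rho q s u v =
  Cmult (Cminus (RtoC 1) v)
    (Cminus (Cplus (Cdiv v (Cminus (RtoC 1) u))
                   (Cmult (Cplus (RtoC 1) v) (Egen rho q s (RtoC q) (Cmult u v))))
            (Cmult (Cmult v (Cminus (Cplus s (RtoC (1 + rho))) (Cmult u v)))
                   (dEv rho q s (RtoC q) (Cmult u v)))).
Proof.
  intros Hrho Hq0 Hq1 _ Hs u v Hu Hv Hu0 HP.
  assert (Hq : 0 < q < 1) by lra.
  split; [eexists; exact (is_Cderive_Phi_u rho q s Hrho Hq Hs u v Hu Hv)|].
  split; [eexists; exact (is_Cderive_Phi_v rho q s Hrho Hq Hs u v Hu Hv)|].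
  split; [exact (Phi_first_order_pde rho q s Hrho Hq Hs u v Hu Hv Hu0 HP)|].
  exact (calL_expand rho q s u v Hu Hu0).
Qed.
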